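(* Let $(a,b,c)$ be a primitive positive definite form of discriminant $\Delta<0$ and let $p$ be any prime. Then $$w\sum_{(A,B,C)\in\Psi_p(a,b,c)}(A,B,C,q)=\left[p-\left(\tfrac{\Delta}{p}\right)\right](a,b,c,q^{p^2})+(a,b,c,q)-P_{p,0}(a,b,c,q).$$
   Context: A form $(a,b,c)$ denotes the $SL(2,\mathbb Z)$-equivalence class of the positive definite form $ax^2+bxy+cy^2$ ($a>0$) of discriminant $b^2-4ac<0$; it is primitive if $\gcd(a,b,c)=1$, and $\mathrm{CL}(\Delta)$ is the set of classes of primitive forms of discriminant $\Delta$. The theta series $(a,b,c,q):=\sum_{(x,y)\in\mathbb Z^2}q^{ax^2+bxy+cy^2}$ (formal power series) depends only on the class; $(a,b,c,q^k)$ is this series with $q\mapsto q^k$. For $m\ge1$, $0\le r<m$: $P_{m,r}\sum_{n\ge0}a(n)q^n=\sum_{n\ge0}a(mn+r)q^{mn+r}$. $\left(\frac{\Delta}{p}\right)$ is the Kronecker symbol. $w=3$ if $\Delta=-3$, $w=2$ if $\Delta=-4$, $w=1$ if $\Delta<-4$. For a prime $p$ and primitive $(a,b,c)$ of discriminant $\Delta$, $\Psi_p(a,b,c)$ is the set of distinct classes of primitive forms occurring in the list $(a,bp,cp^2)$, $(ap^2,\,p(b+2ah),\,ah^2+bh+c)$ ($0\le h<p$) of forms of discriminant $\Delta p^2$ (a subset of $\mathrm{CL}(\Delta p^2)$, depending only on the class of $(a,b,c)$). *)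

From Stdlib Require Import ZArith List Lia Znumtheory.
Import ListNotations.
Open Scope Z_scope.

Definition form := (Z * Z * Z)%type.
Definition fa (f : form) : Z := fst (fst f).
Definition fb (f : form) : Z := snd (fst f).
Definition fc (f : form) : Z := snd f.

Definition disc (f : form) : Z := fb f ^ 2 - 4 * fa f * fc f.
Definition feval (f : form) (x y : Z) : Z :=
  fa f * x ^ 2 + fb f * x * y + fc f * y ^ 2.

Definition primitive (f : form) : Prop := Z.gcd (Z.gcd (fa f) (fb f)) (fc f) = 1.
Definition pos_def (f : form) : Prop := 0 < fa f /\ disc f < 0.

Definition sl2_equiv (f g : form) : Prop :=
  exists al be ga de : Z, al * de - be * ga = 1 /\
    forall x y : Z, feval g x y = feval f (al * x + be * y) (ga * x + de * y).

Definition zrange (N : Z) : list Z :=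
  map (fun k => Z.of_nat k - N) (seq 0 (Z.to_nat (2 * N + 1))).

Definition series := nat -> Z.

(* For a positive definite form every
   solution satisfies |x|,|y| <= 4(|a|+|c|) n (since 4an >= D y^2 and
   4cn >= D x^2 with D = -disc >= 1), so counting in that box is the full
   count. *)
Definition theta (f : form) : series := fun n =>
  let N := 4 * (Z.abs (fa f) + Z.abs (fc f)) * Z.of_nat n in
  Z.of_nat (length (filter (fun xy => feval f (fst xy) (snd xy) =? Z.of_nat n)
                          (list_prod (zrange N) (zrange N)))).

(* s(q) |-> s(q^k), for k >= 1 *)
Definition subst_pow (k : Z) (s : series) : series := fun n =>
  if Z.of_nat n mod k =? 0 then s (Z.to_nat (Z.of_nat n / k)) else 0.

Definition Pmr (m r : Z) (s : series) : series := fun n =>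
  if Z.of_nat n mod m =? r then s n else 0.

Definition kronecker_prime (D p : Z) : Z :=
  if p =? 2 then
    (if Z.even D then 0
     else if orb (D mod 8 =? 1) (D mod 8 =? 7) then 1 else -1)
  else
    (if D mod p =? 0 then 0
     else if existsb (fun x => (x * x - D) mod p =? 0) (map Z.of_nat (seq 0 (Z.to_nat p)))
          then 1 else -1).

Definition wD (D : Z) : Z := if D =? -3 then 3 else if D =? -4 then 2 else 1.

(* The list of forms defining Psi_p(a,b,c) (before taking primitive classes). *)
Definition psi_list (f : form) (p : Z) : list form :=
  (fa f, fb f * p, fc f * p ^ 2) ::
  map (fun k => let h := Z.of_nat k in
        (fa f * p ^ 2, p * (fb f + 2 * fa f * h), fa f * h ^ 2 + fb f * h + fc f))
      (seq 0 (Z.to_nat p)).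

Definition reps_of_classes (R L : list form) : Prop :=
  (forall F, In F R -> primitive F /\ exists G, In G L /\ sl2_equiv G F) /\
  (forall G, In G L -> primitive G -> exists F, In F R /\ sl2_equiv G F) /\
  (forall i j d, (i < j < length R)%nat -> ~ sl2_equiv (nth i R d) (nth j R d)).

Definition sum_list (l : list Z) : Z := fold_right Z.add 0 l.

From Stdlib Require Import ZArith List Lia Znumtheory ClassicalEpsilon Bool.
Import ListNotations.
Open Scope Z_scope.

(* The forms of [psi_list f p] are [f o M_i] for the p + 1 integer matrices [M_i] of determinant [p]
   whose images are the p + 1 lattices [L_i] with [pZ^2 ⊂ L_i ⊂ Z^2] of index [p]; so the coefficient
   of [q^n] in the theta series of [f o M_i] counts the [v ∈ L_i] with [f(v) = n].  The form
   [f o M_i] is primitive iff [p] does not divide [f(v_i)], [v_i] a generator of [L_i] modulo [pZ^2];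
   this fails for the [1 + (Δ/p)] roots of [f] on the projective line over [F_p].  A vector of
   [pZ^2] lies in every [L_i] and any other vector [v] in exactly one, which gives a primitive form
   iff [p ∤ f(v)]; summing over the primitive [L_i] gives the right-hand side.  Finally
   [f o M_i] and [f o M_k] (both primitive) are equivalent iff [L_i = σ L_k] for a proper
   automorphism [σ] of [f]; the [w] automorphisms modulo [±1] permute the [L_i] and act freely on
   those giving primitive forms, so each class among the primitive [f o M_i] occurs [w] times. *)

Definition zcount {A : Type} (P : A -> bool) (l : list A) : Z := Z.of_nat (length (filter P l)).

Lemma zcount_le_bij {A B : Type} (l1 : list A) (l2 : list B) (P : A -> bool) (Q : B -> bool)
    (phi : A -> B) (psi : B -> A) :
  NoDup l1 ->
  (forall x, In x l1 -> P x = true -> In (phi x) l2 /\ Q (phi x) = true) ->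
  (forall x, In x l1 -> P x = true -> psi (phi x) = x) ->
  zcount P l1 <= zcount Q l2.
Proof.
  intros N1 H1 K1. unfold zcount. apply inj_le.
  rewrite <- (length_map phi). apply NoDup_incl_length.
  - apply NoDup_map_NoDup_ForallPairs; [|apply NoDup_filter; auto].
    intros u v Hu Hv E. apply filter_In in Hu, Hv.
    rewrite <- (K1 u), <- (K1 v) by tauto. now rewrite E.
  - intros w Hw. apply in_map_iff in Hw. destruct Hw as [u [<- Hu]].
    apply filter_In in Hu. apply filter_In. apply H1; tauto.
Qed.

Lemma zcount_bij {A B : Type} (l1 : list A) (l2 : list B) (P : A -> bool) (Q : B -> bool)
    (phi : A -> B) (psi : B -> A) :
  NoDup l1 -> NoDup l2 ->
  (forall x, In x l1 -> P x = true -> In (phi x) l2 /\ Q (phi x) = true) ->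
  (forall y, In y l2 -> Q y = true -> In (psi y) l1 /\ P (psi y) = true) ->
  (forall x, In x l1 -> P x = true -> psi (phi x) = x) ->
  (forall y, In y l2 -> Q y = true -> phi (psi y) = y) ->
  zcount P l1 = zcount Q l2.
Proof.
  intros N1 N2 H1 H2 K1 K2.
  apply Z.le_antisymm; eapply zcount_le_bij; eauto.
Qed.

Lemma zcount_enum {A : Type} (l s : list A) (P : A -> bool) :
  NoDup l -> NoDup s -> (forall x, In x l /\ P x = true <-> In x s) ->
  zcount P l = Z.of_nat (length s).
Proof.
  intros Nl Ns H.
  replace (Z.of_nat (length s)) with (zcount (fun _ => true) s)
    by (unfold zcount; now rewrite forallb_filter_id by (apply forallb_forall; auto)).
  apply (zcount_bij l s P (fun _ => true) id id); auto; firstorder.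
Qed.

Lemma zcount_cons {A : Type} (P : A -> bool) x l :
  zcount P (x :: l) = (if P x then 1 else 0) + zcount P l.
Proof. unfold zcount. cbn [filter]. destruct (P x); cbn [length]; lia. Qed.

Lemma zcount_negb {A : Type} (P : A -> bool) l :
  zcount (fun x => negb (P x)) l = Z.of_nat (length l) - zcount P l.
Proof. unfold zcount. rewrite <- (filter_length P l). lia. Qed.

Lemma sum_list_cons x l : sum_list (x :: l) = x + sum_list l.
Proof. reflexivity. Qed.

Lemma sum_list_ext {A : Type} (F G : A -> Z) l :
  (forall x, In x l -> F x = G x) -> sum_list (map F l) = sum_list (map G l).
Proof. intros H. f_equal. now apply map_ext_in. Qed.

Lemma sum_list_add {A : Type} (F G : A -> Z) l :
  sum_list (map (fun x => F x + G x) l) = sum_list (map F l) + sum_list (map G l).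
Proof. induction l as [|x l IH]; [reflexivity|]. cbn [map]. rewrite !sum_list_cons, IH. ring. Qed.

Lemma sum_list_mul_l {A : Type} (k : Z) (F : A -> Z) l :
  sum_list (map (fun x => k * F x) l) = k * sum_list (map F l).
Proof. induction l as [|x l IH]; [cbn; ring|]. cbn [map]. rewrite !sum_list_cons, IH. ring. Qed.

Lemma sum_list_zero {A : Type} (l : list A) : sum_list (map (fun _ => 0) l) = 0.
Proof. induction l as [|x l IH]; [reflexivity|]. cbn [map]. rewrite sum_list_cons, IH. ring. Qed.

Lemma sum_list_swap {A B : Type} (F : A -> B -> Z) l1 l2 :
  sum_list (map (fun i => sum_list (map (fun v => F i v) l2)) l1) =
  sum_list (map (fun v => sum_list (map (fun i => F i v) l1)) l2).
Proof.
  induction l1 as [|i l1 IH]; cbn [map].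
  - symmetry. apply sum_list_zero.
  - rewrite sum_list_cons, IH, <- sum_list_add. apply sum_list_ext. reflexivity.
Qed.

Lemma zcount_sum {A : Type} (P : A -> bool) l :
  zcount P l = sum_list (map (fun x => if P x then 1 else 0) l).
Proof.
  induction l as [|x l IH]; [reflexivity|].
  cbn [map]. rewrite zcount_cons, sum_list_cons, IH. reflexivity.
Qed.

Lemma zcount_unique {A : Type} (l : list A) (P : A -> bool) x0 :
  NoDup l -> In x0 l -> (forall x, In x l -> P x = true -> x = x0) ->
  zcount P l = if P x0 then 1 else 0.
Proof.
  intros Hn Hin H. destruct (P x0) eqn:E.
  - apply (zcount_enum l [x0]); [auto|repeat constructor; auto|].
    intros x; simpl; split; [intros [Hx Px]; left; symmetry; auto|].
    intros [<-|[]]; auto.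
  - apply (zcount_enum l []); [auto|constructor|].
    intros x; simpl; split; [|tauto]. intros [Hx Px]. rewrite (H x Hx Px) in Px. congruence.
Qed.

Definition fvec (f : form) (w : Z * Z) : Z := feval f (fst w) (snd w).

Lemma form_eta (F : form) : F = (fa F, fb F, fc F).
Proof. destruct F as [[A B] C]; reflexivity. Qed.

Lemma fvec_abc A B C x y : fvec (A, B, C) (x, y) = A * x * x + B * x * y + C * y * y.
Proof. unfold fvec, feval, fa, fb, fc; cbn [fst snd]; ring. Qed.

Lemma disc_abc A B C : disc (A, B, C) = B * B - 4 * A * C.
Proof. unfold disc, fa, fb, fc; cbn [fst snd]; ring. Qed.

Lemma fvec_scale f q x y : fvec f (q * x, q * y) = q * q * fvec f (x, y).
Proof. unfold fvec, feval; cbn [fst snd]. ring. Qed.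

Lemma pos_def_fvec_pos A B C v :
  pos_def (A, B, C) -> v <> (0, 0) -> 0 < fvec (A, B, C) v.
Proof.
  destruct v as [x y]. unfold pos_def; rewrite disc_abc; unfold fa; cbn [fst snd].
  intros [HA HD] Hne. rewrite fvec_abc.
  assert (E : 4 * A * (A * x * x + B * x * y + C * y * y)
              = (2 * A * x + B * y) * (2 * A * x + B * y) + (4 * A * C - B * B) * (y * y)) by ring.
  assert (0 <= (2 * A * x + B * y) * (2 * A * x + B * y)) by apply Z.square_nonneg.
  destruct (Z.eq_dec y 0) as [->|Hy].
  - assert (x <> 0) by congruence. assert (0 < x * x) by nia. nia.
  - assert (0 < y * y) by nia. nia.
Qed.

Definition in_box (N : Z) (v : Z * Z) : Prop := -N <= fst v <= N /\ -N <= snd v <= N.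

(* Completing the square in x (resp. y): [4 A f(v) >= |Δ| y^2] and [4 C f(v) >= |Δ| x^2]. *)
Lemma pos_def_fvec_bound A B C v :
  pos_def (A, B, C) -> in_box (4 * (Z.abs A + Z.abs C) * fvec (A, B, C) v) v.
Proof.
  destruct v as [x y]. unfold pos_def, in_box; rewrite disc_abc; unfold fa; cbn [fst snd].
  intros [HA HD]. rewrite fvec_abc. set (n := A * x * x + B * x * y + C * y * y).
  assert (HC : 0 < C) by nia.
  assert (E1 : 4 * A * n = (2 * A * x + B * y) * (2 * A * x + B * y) + (4 * A * C - B * B) * (y * y))
    by (unfold n; ring).
  assert (E2 : 4 * C * n = (2 * C * y + B * x) * (2 * C * y + B * x) + (4 * A * C - B * B) * (x * x))
    by (unfold n; ring).
  assert (0 <= (2 * A * x + B * y) * (2 * A * x + B * y)) by apply Z.square_nonneg.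
  assert (0 <= (2 * C * y + B * x) * (2 * C * y + B * x)) by apply Z.square_nonneg.
  assert (y * y <= 4 * A * n) by nia. assert (x * x <= 4 * C * n) by nia.
  rewrite !Z.abs_eq by lia. nia.
Qed.

Lemma In_zrange x N : In x (zrange N) <-> -N <= x <= N.
Proof.
  unfold zrange; rewrite in_map_iff; split.
  - intros [k [<- Hk]]. apply in_seq in Hk. lia.
  - intros H. exists (Z.to_nat (x + N)). split; [lia|]. apply in_seq. lia.
Qed.

Lemma NoDup_zrange N : NoDup (zrange N).
Proof.
  unfold zrange. apply NoDup_map_NoDup_ForallPairs; [|apply seq_NoDup].
  intros x y _ _ H. lia.
Qed.

Lemma NoDup_list_prod {A B : Type} (l : list A) (l' : list B) :
  NoDup l -> NoDup l' -> NoDup (list_prod l l').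
Proof.
  induction 1 as [|x l Hx Hl IH]; intros Hl'; simpl; [constructor|].
  apply NoDup_app.
  - apply NoDup_map_NoDup_ForallPairs; auto. intros u v _ _ H; now inversion H.
  - auto.
  - intros [u w] H1 H2. apply in_map_iff in H1. destruct H1 as [y [Hy _]]. inversion Hy; subst.
    apply in_prod_iff in H2. tauto.
Qed.

Definition box (N : Z) : list (Z * Z) := list_prod (zrange N) (zrange N).

Lemma In_box N v : In v (box N) <-> in_box N v.
Proof. destruct v; unfold box, in_box; rewrite in_prod_iff, !In_zrange; simpl; tauto. Qed.

Lemma NoDup_box N : NoDup (box N).
Proof. apply NoDup_list_prod; apply NoDup_zrange. Qed.

Lemma zcount_box_bij (P Q : Z * Z -> bool) N1 N2 (phi psi : Z * Z -> Z * Z) :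
  (forall v, P v = true -> in_box N1 v) ->
  (forall v, Q v = true -> in_box N2 v) ->
  (forall v, P v = true -> Q (phi v) = true) ->
  (forall v, Q v = true -> P (psi v) = true) ->
  (forall v, P v = true -> psi (phi v) = v) ->
  (forall v, Q v = true -> phi (psi v) = v) ->
  zcount P (box N1) = zcount Q (box N2).
Proof.
  intros B1 B2 HPQ HQP K1 K2.
  apply (zcount_bij _ _ _ _ phi psi); auto using NoDup_box;
    intros v _ Hv; rewrite ?In_box; auto.
Qed.

Definition solb (F : form) (n : Z) (v : Z * Z) : bool := fvec F v =? n.

Definition theta_box (F : form) (n : nat) : list (Z * Z) :=
  box (4 * (Z.abs (fa F) + Z.abs (fc F)) * Z.of_nat n).

Lemma theta_zcount F n : theta F n = zcount (solb F (Z.of_nat n)) (theta_box F n).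
Proof. reflexivity. Qed.

Lemma solb_in_box F n v :
  pos_def F -> solb F n v = true -> in_box (4 * (Z.abs (fa F) + Z.abs (fc F)) * n) v.
Proof.
  rewrite (form_eta F). unfold solb. intros H E. apply Z.eqb_eq in E. subst n.
  now apply pos_def_fvec_bound.
Qed.

Lemma theta_bij F G n (phi psi : Z * Z -> Z * Z) :
  pos_def F -> pos_def G ->
  (forall v, fvec F v = Z.of_nat n -> fvec G (phi v) = Z.of_nat n) ->
  (forall v, fvec G v = Z.of_nat n -> fvec F (psi v) = Z.of_nat n) ->
  (forall v, psi (phi v) = v) -> (forall v, phi (psi v) = v) ->
  theta F n = theta G n.
Proof.
  intros HF HG H1 H2 K1 K2. rewrite !theta_zcount.
  apply (zcount_box_bij _ _ _ _ phi psi); auto; intros v Hv;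
    try (now apply solb_in_box); unfold solb in *; rewrite Z.eqb_eq in *; auto.
Qed.

(** * Integer 2x2 matrices and SL(2,Z)-equivalence *)

Definition mat := (Z * Z * Z * Z)%type.

Definition mapp (m : mat) (v : Z * Z) : Z * Z :=
  let '(m11, m12, m21, m22) := m in (m11 * fst v + m12 * snd v, m21 * fst v + m22 * snd v).
Definition mdet (m : mat) : Z := let '(m11, m12, m21, m22) := m in m11 * m22 - m12 * m21.
Definition mmul (m n : mat) : mat :=
  let '(a1, a2, a3, a4) := m in let '(b1, b2, b3, b4) := n in
  (a1 * b1 + a2 * b3, a1 * b2 + a2 * b4, a3 * b1 + a4 * b3, a3 * b2 + a4 * b4).
Definition madj (m : mat) : mat := let '(a1, a2, a3, a4) := m in (a4, - a2, - a3, a1).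
Definition mscal (q : Z) (m : mat) : mat := let '(a1, a2, a3, a4) := m in (q * a1, q * a2, q * a3, q * a4).

Ltac mat_simpl := repeat match goal with
  | m : mat |- _ => let a1 := fresh "a" in let a2 := fresh "a" in let a3 := fresh "a" in
                    let a4 := fresh "a" in destruct m as [[[a1 a2] a3] a4]
  | v : (Z * Z)%type |- _ => let x := fresh "x" in let y := fresh "y" in destruct v as [x y]
  end; unfold mapp, mdet, mmul, madj, mscal in *; cbn [fst snd] in *.

Lemma mapp_mul m n v : mapp (mmul m n) v = mapp m (mapp n v).
Proof. mat_simpl; f_equal; ring. Qed.

Lemma mdet_mul m n : mdet (mmul m n) = mdet m * mdet n.
Proof. mat_simpl; ring. Qed.

Lemma mdet_adj m : mdet (madj m) = mdet m.
Proof. mat_simpl; ring. Qed.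

Lemma mdet_scal q m : mdet (mscal q m) = q * q * mdet m.
Proof. mat_simpl; ring. Qed.

Lemma mapp_adj_r m v : mapp m (mapp (madj m) v) = (mdet m * fst v, mdet m * snd v).
Proof. mat_simpl; f_equal; ring. Qed.

Lemma mapp_adj_l m v : mapp (madj m) (mapp m v) = (mdet m * fst v, mdet m * snd v).
Proof. mat_simpl; f_equal; ring. Qed.

Lemma mapp_scal q m v : mapp (mscal q m) v = (q * fst (mapp m v), q * snd (mapp m v)).
Proof. mat_simpl; f_equal; ring. Qed.

Lemma mapp_scal_r q m x y : mapp m (q * x, q * y) = (q * fst (mapp m (x, y)), q * snd (mapp m (x, y))).
Proof. mat_simpl; f_equal; ring. Qed.

Lemma mapp_comb m l q z w :
  mapp m (l * fst w + q * fst z, l * snd w + q * snd z) =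
  (l * fst (mapp m w) + q * fst (mapp m z), l * snd (mapp m w) + q * snd (mapp m z)).
Proof. mat_simpl; f_equal; ring. Qed.

Lemma mapp_columns m x y :
  mapp m (x, y) = (x * fst (mapp m (1, 0)) + y * fst (mapp m (0, 1)),
                   x * snd (mapp m (1, 0)) + y * snd (mapp m (0, 1))).
Proof. mat_simpl; f_equal; ring. Qed.

Lemma mat_eq4 (x1 x2 x3 x4 y1 y2 y3 y4 : Z) :
  x1 = y1 -> x2 = y2 -> x3 = y3 -> x4 = y4 -> ((x1, x2, x3, x4) : mat) = (y1, y2, y3, y4).
Proof. intros; subst; reflexivity. Qed.

Lemma mat_ext m n : (forall v, mapp m v = mapp n v) -> m = n.
Proof.
  intros H. pose proof (H (1, 0)) as E1. pose proof (H (0, 1)) as E2.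
  mat_simpl. injection E1 as E1 E1'. injection E2 as E2 E2'.
  apply mat_eq4; lia.
Qed.

Lemma mapp_det1_inj m v : mdet m = 1 -> mapp (madj m) (mapp m v) = v.
Proof. intros Hd. rewrite mapp_adj_l, Hd. destruct v; cbn [fst snd]; now rewrite !Z.mul_1_l. Qed.

Lemma mapp_det1_surj m v : mdet m = 1 -> mapp m (mapp (madj m) v) = v.
Proof. intros Hd. rewrite mapp_adj_r, Hd. destruct v; cbn [fst snd]; now rewrite !Z.mul_1_l. Qed.

Lemma sl2_equiv_mat f g :
  sl2_equiv f g <-> exists s, mdet s = 1 /\ forall v, fvec g v = fvec f (mapp s v).
Proof.
  split.
  - intros [al [be [ga [de [Hd H]]]]]. exists (al, be, ga, de). split; [exact Hd|].
    intros [x y]. apply H.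
  - intros [[[[al be] ga] de] [Hd H]]. exists al, be, ga, de. split; [exact Hd|].
    intros x y. apply (H (x, y)).
Qed.

Lemma sl2_equiv_refl f : sl2_equiv f f.
Proof.
  apply sl2_equiv_mat. exists (1, 0, 0, 1). split; [reflexivity|].
  intros [x y]. unfold mapp; cbn [fst snd]. do 2 f_equal; ring.
Qed.

Lemma sl2_equiv_sym f g : sl2_equiv f g -> sl2_equiv g f.
Proof.
  rewrite !sl2_equiv_mat. intros [s [Hd H]]. exists (madj s). split; [now rewrite mdet_adj|].
  intros v. now rewrite H, mapp_det1_surj.
Qed.

Lemma sl2_equiv_trans f g h : sl2_equiv f g -> sl2_equiv g h -> sl2_equiv f h.
Proof.
  rewrite !sl2_equiv_mat. intros [s [Hs H]] [t [Ht H']].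
  exists (mmul s t). split; [now rewrite mdet_mul, Hs, Ht|].
  intros v. now rewrite H', H, mapp_mul.
Qed.

Lemma form_coeffs g :
  g = (fvec g (1, 0), fvec g (1, 1) - fvec g (1, 0) - fvec g (0, 1), fvec g (0, 1)).
Proof. destruct g as [[A B] C]. rewrite !fvec_abc. repeat f_equal; ring. Qed.

Lemma disc_compose f g m : (forall v, fvec g v = fvec f (mapp m v)) ->
  disc g = mdet m * mdet m * disc f.
Proof.
  intros H. rewrite (form_coeffs g), !H, (form_eta f), !disc_abc.
  destruct m as [[[m1 m2] m3] m4]. unfold mdet, mapp; cbn [fst snd]. rewrite !fvec_abc. ring.
Qed.

Lemma pos_def_compose f g m : pos_def f -> mdet m <> 0 ->
  (forall v, fvec g v = fvec f (mapp m v)) -> pos_def g.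
Proof.
  intros Hf Hd H. split.
  - rewrite (form_coeffs g); unfold fa; cbn [fst snd]. rewrite H, (form_eta f).
    apply pos_def_fvec_pos; [now rewrite <- form_eta|].
    intros E. apply Hd. destruct m as [[[m1 m2] m3] m4]. unfold mapp, mdet in *; cbn [fst snd] in *.
    injection E as E1 E2. rewrite !Z.mul_1_r, !Z.mul_0_r, !Z.add_0_r in *. subst. ring.
  - rewrite (disc_compose f g m H). destruct Hf. nia.
Qed.

Lemma primitive_intro f :
  (forall d, 0 <= d -> (d | fa f) -> (d | fb f) -> (d | fc f) -> d = 1) -> primitive f.
Proof.
  intros H. apply H; [apply Z.gcd_nonneg| | |apply Z.gcd_divide_r];
    (eapply Z.divide_trans; [apply Z.gcd_divide_l|]); [apply Z.gcd_divide_l|apply Z.gcd_divide_r].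
Qed.

Lemma primitive_common_divisor f d :
  primitive f -> (d | fa f) -> (d | fb f) -> (d | fc f) -> (d | 1).
Proof. unfold primitive; intros H h1 h2 h3. rewrite <- H. repeat apply Z.gcd_greatest; auto. Qed.

Lemma divide_fvec f d v : (d | fa f) -> (d | fb f) -> (d | fc f) -> (d | fvec f v).
Proof.
  intros ha hb hc. destruct v as [x y]. rewrite (form_eta f), fvec_abc.
  apply Z.divide_add_r; [apply Z.divide_add_r|]; rewrite <- !Z.mul_assoc; now apply Z.divide_mul_l.
Qed.

(* [det^2 f = g o adj m], so a common divisor of the coefficients of [g] divides [det^2 f]. *)
Lemma common_divisor_compose f g m d : primitive f ->
  (forall v, fvec g v = fvec f (mapp m v)) ->
  (d | fa g) -> (d | fb g) -> (d | fc g) -> (d | mdet m * mdet m).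
Proof.
  intros Hf H ha hb hc. set (e := mdet m).
  assert (Hv : forall v, (d | e * e * fvec f v)).
  { intros [x y]. rewrite <- fvec_scale.
    replace (e * x, e * y) with (mapp m (mapp (madj m) (x, y))) by now rewrite mapp_adj_r.
    rewrite <- H. now apply divide_fvec. }
  assert (E : Z.gcd (Z.gcd (e * e * fa f) (e * e * fb f)) (e * e * fc f) = e * e).
  { assert (Ha : Z.abs (e * e) = e * e) by (apply Z.abs_eq, Z.square_nonneg).
    unfold primitive in Hf. rewrite Z.gcd_mul_mono_l, Ha, Z.gcd_mul_mono_l, Ha, Hf. ring. }
  rewrite <- E. rewrite (form_coeffs f). unfold fa, fb, fc; cbn [fst snd].
  repeat apply Z.gcd_greatest; rewrite ?Z.mul_sub_distr_l; repeat apply Z.divide_sub_r; apply Hv.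
Qed.

Lemma sl2_equiv_pos_def f g : sl2_equiv f g -> pos_def f -> pos_def g.
Proof.
  rewrite sl2_equiv_mat. intros [s [Hd H]] Hf. apply (pos_def_compose f g s); auto. lia.
Qed.

Lemma sl2_equiv_primitive f g : sl2_equiv f g -> primitive g -> primitive f.
Proof.
  intros E Hg. apply sl2_equiv_sym, sl2_equiv_mat in E. destruct E as [s [Hd H]].
  apply primitive_intro. intros d Hd0 ha hb hc.
  apply Z.divide_1_r_nonneg; [exact Hd0|].
  replace 1 with (mdet s * mdet s) by (rewrite Hd; ring).
  now apply (common_divisor_compose g f s d).
Qed.

Lemma sl2_equiv_theta f g n : sl2_equiv f g -> pos_def f -> theta f n = theta g n.
Proof.
  intros E Hf. pose proof (sl2_equiv_pos_def _ _ E Hf) as Hg.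
  apply sl2_equiv_mat in E. destruct E as [s [Hd H]].
  apply (theta_bij f g n (mapp (madj s)) (mapp s)); auto; intros v.
  - now rewrite H, mapp_det1_surj.
  - now rewrite <- H.
  - now apply mapp_det1_surj.
  - now apply mapp_det1_inj.
Qed.

(** * The p + 1 sublattices of index p *)

(* [lat_mat p i] has image the lattice [L_i]: [L_0 = {(x, y) | p | y}] and
   [L_(h+1) = {(x, y) | p | x - h y}]; the forms of [psi_list f p] are the [f o lat_mat p i]. *)
Definition lat_mat (p : Z) (i : nat) : mat :=
  match i with O => (1, 0, 0, p) | S h => (p, Z.of_nat h, 0, 1) end.
Definition lat_eq (i : nat) (w : Z * Z) : Z :=
  match i with O => snd w | S h => fst w - Z.of_nat h * snd w end.
Definition lat_gen (i : nat) : Z * Z := match i with O => (1, 0) | S h => (Z.of_nat h, 1) end.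
Definition in_lat (p : Z) (i : nat) (w : Z * Z) : bool := lat_eq i w mod p =? 0.
Definition not_in_pZ2 (p : Z) (w : Z * Z) : Prop := ~ ((p | fst w) /\ (p | snd w)).
Definition psi_form (f : form) (p : Z) (i : nat) : form := nth i (psi_list f p) (0, 0, 0).
Definition lat_indices (p : Z) : list nat := seq 0 (S (Z.to_nat p)).

Lemma mod_eqb_0 p x : 0 < p -> (x mod p =? 0) = true <-> (p | x).
Proof. intros Hp. rewrite Z.eqb_eq. split; intro H; apply Z.mod_divide; auto; lia. Qed.

Lemma mod_eqb_0_false p x : 0 < p -> (x mod p =? 0) = false <-> ~ (p | x).
Proof. intros Hp. rewrite <- (mod_eqb_0 p x Hp). destruct (x mod p =? 0); split; congruence. Qed.

Lemma psi_list_length f p : length (psi_list f p) = S (Z.to_nat p).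
Proof. unfold psi_list; simpl. now rewrite length_map, length_seq. Qed.

Lemma In_psi_list f p G : In G (psi_list f p) ->
  exists k, (k <= Z.to_nat p)%nat /\ G = psi_form f p k.
Proof.
  intros H. destruct (In_nth _ _ (0, 0, 0) H) as [k [Hk E]]. rewrite psi_list_length in Hk.
  exists k. split; [lia|]. now symmetry.
Qed.

Lemma psi_form_in f p i : (i <= Z.to_nat p)%nat -> In (psi_form f p i) (psi_list f p).
Proof. intros Hi. apply nth_In. rewrite psi_list_length. lia. Qed.

Lemma psi_form_0 f p : psi_form f p 0 = (fa f, fb f * p, fc f * p ^ 2).
Proof. reflexivity. Qed.

Lemma psi_form_S f p h : (h < Z.to_nat p)%nat ->
  psi_form f p (S h) = (fa f * p ^ 2, p * (fb f + 2 * fa f * Z.of_nat h),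
                        fa f * Z.of_nat h ^ 2 + fb f * Z.of_nat h + fc f).
Proof.
  intros H. unfold psi_form, psi_list; cbn [nth].
  erewrite nth_indep by (rewrite length_map, length_seq; auto).
  rewrite (map_nth _ _ 0%nat), seq_nth by auto. reflexivity.
Qed.

Lemma fvec_psi_form f p i v : (i <= Z.to_nat p)%nat ->
  fvec (psi_form f p i) v = fvec f (mapp (lat_mat p i) v).
Proof.
  intros Hi. destruct v as [x y]. destruct i as [|h]; [rewrite psi_form_0 | rewrite psi_form_S by lia];
    unfold fvec, mapp, lat_mat, feval, fa, fb, fc; cbn [fst snd]; ring.
Qed.

Lemma mdet_lat_mat p i : mdet (lat_mat p i) = p.
Proof. destruct i; unfold mdet, lat_mat; ring. Qed.

Lemma lat_gen_mat p i : lat_gen i = mapp (lat_mat p i) (match i with O => (1, 0) | S _ => (0, 1) end).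
Proof. destruct i; unfold lat_gen, mapp, lat_mat; cbn [fst snd]; f_equal; ring. Qed.

Lemma fvec_lat_gen f i :
  fvec f (lat_gen i) = match i with O => fa f | S h => fa f * Z.of_nat h ^ 2 + fb f * Z.of_nat h + fc f end.
Proof. destruct i; unfold fvec, lat_gen, feval; cbn [fst snd]; ring. Qed.

Section Sublattices.
Variable p : Z.
Hypothesis Hp : prime p.

Let p_pos : 0 < p.
Proof. pose proof (prime_ge_2 _ Hp). lia. Qed.

Lemma in_lat_iff i w : in_lat p i w = true <-> (p | lat_eq i w).
Proof. apply mod_eqb_0, p_pos. Qed.

Lemma in_lat_mat i w : in_lat p i w = true <-> exists u, w = mapp (lat_mat p i) u.
Proof.
  rewrite in_lat_iff. split.
  - destruct w as [x y]. intros [k Hk]. destruct i as [|h]; unfold lat_eq in Hk; cbn [fst snd] in Hk.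
    + exists (x, k). unfold mapp, lat_mat; cbn [fst snd]. f_equal; lia.
    + exists (k, y). unfold mapp, lat_mat; cbn [fst snd]. f_equal; lia.
  - intros [[s t] ->]. destruct i as [|h]; unfold lat_eq, mapp, lat_mat; cbn [fst snd];
      [exists t | exists s]; ring.
Qed.

Lemma in_lat_comb i l z w : in_lat p i w = true ->
  in_lat p i (l * fst w + p * fst z, l * snd w + p * snd z) = true.
Proof.
  rewrite !in_lat_iff. intros H.
  replace (lat_eq i _) with (l * lat_eq i w + p * lat_eq i z) by (destruct i; unfold lat_eq; cbn [fst snd]; ring).
  apply Z.divide_add_r; [now apply Z.divide_mul_r|apply Z.divide_factor_l].
Qed.

Lemma in_lat_lat_gen_comb i w : in_lat p i w = true ->
  exists l z, w = (l * fst (lat_gen i) + p * fst z, l * snd (lat_gen i) + p * snd z).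
Proof.
  intros H. apply in_lat_mat in H. destruct H as [[s t] ->].
  destruct i as [|h]; unfold mapp, lat_mat, lat_gen; cbn [fst snd].
  - exists s, (0, t). cbn [fst snd]. f_equal; ring.
  - exists t, (s, 0). cbn [fst snd]. f_equal; ring.
Qed.

Lemma in_lat_det i w w' : in_lat p i w = true -> in_lat p i w' = true ->
  (p | fst w * snd w' - snd w * fst w').
Proof.
  rewrite !in_lat_iff. destruct w as [x y], w' as [x' y'].
  destruct i as [|h]; unfold lat_eq; cbn [fst snd]; intros H H'.
  - replace (x * y' - y * x') with (x * y' + (- x') * y) by ring.
    apply Z.divide_add_r; now apply Z.divide_mul_r.
  - replace (x * y' - y * x') with (y' * (x - Z.of_nat h * y) + (- y) * (x' - Z.of_nat h * y')) by ring.
    apply Z.divide_add_r; now apply Z.divide_mul_r.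
Qed.

Lemma in_lat_unique i j w : not_in_pZ2 p w -> (i <= Z.to_nat p)%nat -> (j <= Z.to_nat p)%nat ->
  in_lat p i w = true -> in_lat p j w = true -> i = j.
Proof.
  intros Hw Hi Hj H1 H2. apply in_lat_iff in H1, H2. destruct w as [x y]; unfold not_in_pZ2 in Hw.
  cbn [fst snd] in *.
  assert (Hx : forall h, (p | x - Z.of_nat h * y) -> (p | y) -> False).
  { intros h Hh Hy. apply Hw. split; [|exact Hy].
    replace x with ((x - Z.of_nat h * y) + Z.of_nat h * y) by ring.
    apply Z.divide_add_r; [exact Hh|now apply Z.divide_mul_r]. }
  destruct i as [|h], j as [|h']; unfold lat_eq in *; cbn [fst snd] in *; auto;
    try (exfalso; eapply Hx; eassumption).
  assert (Hd : (p | (Z.of_nat h' - Z.of_nat h) * y)).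
  { replace ((Z.of_nat h' - Z.of_nat h) * y) with ((x - Z.of_nat h * y) - (x - Z.of_nat h' * y)) by ring.
    now apply Z.divide_sub_r. }
  apply prime_mult in Hd; auto. destruct Hd as [[k Hk]|Hd]; [|exfalso; eapply Hx; eassumption].
  assert (k = 0) by nia. subst k. lia.
Qed.

Lemma in_lat_exists w : not_in_pZ2 p w -> exists i, (i <= Z.to_nat p)%nat /\ in_lat p i w = true.
Proof.
  intros Hw. destruct w as [x y]; unfold not_in_pZ2 in Hw; cbn [fst snd] in *.
  destruct (Zdivide_dec p y) as [Hy|Hy].
  - exists 0%nat. split; [lia|]. now apply in_lat_iff.
  - apply prime_rel_prime in Hy; auto. apply rel_prime_bezout in Hy. destruct Hy as [u v E].
    (* [h = x v mod p] solves [x = h y (mod p)] since [v] inverts [y] mod [p] *)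
    exists (S (Z.to_nat ((x * v) mod p))).
    assert (0 <= (x * v) mod p < p) by (apply Z.mod_pos_bound; lia).
    split; [lia|]. apply in_lat_iff. unfold lat_eq; cbn [fst snd].
    rewrite Z2Nat.id, (Z.mod_eq (x * v) p) by lia.
    exists (x * u + (x * v / p) * y). replace x with (x * (u * p + v * y)) at 1 by (rewrite E; ring). ring.
Qed.

Definition lat_of (w : Z * Z) : nat :=
  match find (fun i => in_lat p i w) (lat_indices p) with Some i => i | None => 0%nat end.

Lemma lat_of_spec w i : not_in_pZ2 p w -> (i <= Z.to_nat p)%nat ->
  (in_lat p i w = true <-> i = lat_of w).
Proof.
  intros Hw Hi. unfold lat_of, lat_indices.
  destruct (find (fun i => in_lat p i w) (seq 0 (S (Z.to_nat p)))) eqn:E.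
  - apply find_some in E. destruct E as [Hin E]. apply in_seq in Hin.
    split; [intros H; eapply in_lat_unique; eauto; lia|intros ->; auto].
  - exfalso. destruct (in_lat_exists w Hw) as [j [Hj Hj']].
    eapply find_none in E; [rewrite E in Hj'; discriminate|]. apply in_seq; lia.
Qed.

Lemma lat_of_le w : not_in_pZ2 p w -> (lat_of w <= Z.to_nat p)%nat.
Proof.
  intros Hw. destruct (in_lat_exists w Hw) as [j [Hj Hj']].
  apply lat_of_spec in Hj'; auto. lia.
Qed.

Lemma lat_of_in_lat w : not_in_pZ2 p w -> in_lat p (lat_of w) w = true.
Proof. intros Hw. apply lat_of_spec; auto using lat_of_le. Qed.

Lemma lat_gen_not_in_pZ2 i : not_in_pZ2 p (lat_gen i).
Proof.
  intros [H1 H2]. pose proof (prime_ge_2 _ Hp). destruct i; cbn [lat_gen fst snd] in *;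
    [apply Z.divide_1_r_nonneg in H1|apply Z.divide_1_r_nonneg in H2]; lia.
Qed.

Lemma not_in_pZ2_mapp s w : mdet s = 1 -> not_in_pZ2 p w -> not_in_pZ2 p (mapp s w).
Proof.
  intros Hd Hw [H1 H2]. apply Hw. rewrite <- (mapp_det1_inj s w Hd).
  destruct s as [[[s1 s2] s3] s4]. unfold madj, mapp in *; cbn [fst snd] in *.
  split; apply Z.divide_add_r; now apply Z.divide_mul_r.
Qed.

End Sublattices.

(** * Primitivity of the forms of [psi_list] *)

Lemma prime_square_divisor p d : prime p -> 0 <= d -> (d | p * p) -> ~ (p | d) -> d = 1.
Proof.
  intros Hp Hd H Hn. pose proof (prime_ge_2 _ Hp).
  assert (Hdp : (d | p)) by (eapply Gauss; [exact H|apply rel_prime_sym, prime_rel_prime; auto]).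
  apply prime_divisors in Hdp; auto.
  destruct Hdp as [E|[E|[E|E]]]; subst; try lia; exfalso; apply Hn, Z.divide_refl.
Qed.

Section PsiForms.
Variables (f : form) (p : Z).
Hypothesis Hp : prime p.

Lemma psi_form_pos_def i : pos_def f -> (i <= Z.to_nat p)%nat -> pos_def (psi_form f p i).
Proof.
  intros Hf Hi. pose proof (prime_ge_2 _ Hp).
  apply (pos_def_compose f _ (lat_mat p i)); auto.
  - rewrite mdet_lat_mat. lia.
  - intros v. now apply fvec_psi_form.
Qed.

Lemma psi_form_primitive i : primitive f -> (i <= Z.to_nat p)%nat ->
  (primitive (psi_form f p i) <-> ~ (p | fvec f (lat_gen i))).
Proof.
  intros Hf Hi. pose proof (prime_ge_2 _ Hp) as Hp2. set (g := psi_form f p i).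
  assert (Hcoef : forall d, (d | fa g) -> (d | fc g) -> (d | fvec f (lat_gen i))).
  { intros d ha hc. unfold g in *. rewrite fvec_lat_gen.
    destruct i as [|h]; [rewrite psi_form_0 in ha; exact ha|rewrite psi_form_S in hc by lia; exact hc]. }
  assert (Hdiv : (p | fvec f (lat_gen i)) -> (p | fa g) /\ (p | fb g) /\ (p | fc g)).
  { unfold g. rewrite fvec_lat_gen. intros H.
    destruct i as [|h]; [rewrite psi_form_0|rewrite psi_form_S by lia]; cbn [fa fb fc fst snd];
      refine (conj _ (conj _ _)); auto;
      [exists (fb f)|exists (fc f * p)|exists (fa f * p)|exists (fb f + 2 * fa f * Z.of_nat h)]; ring. }
  split.
  - intros Hprim Hd. destruct (Hdiv Hd) as [h1 [h2 h3]].
    pose proof (primitive_common_divisor g p Hprim h1 h2 h3) as H1.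
    apply Z.divide_1_r_nonneg in H1; lia.
  - intros Hn. apply primitive_intro. intros d Hd0 ha hb hc.
    apply (prime_square_divisor p d Hp Hd0).
    + rewrite <- (mdet_lat_mat p i). apply (common_divisor_compose f g); auto.
      intros v. now apply fvec_psi_form.
    + intros X. apply Hn. eapply Z.divide_trans; [exact X|now apply Hcoef].
Qed.

End PsiForms.

(** * The number of imprimitive forms in [psi_list] is [1 + (Δ/p)] *)

Definition residues (p : Z) : list Z := map Z.of_nat (seq 0 (Z.to_nat p)).

Lemma In_residues p x : In x (residues p) <-> 0 <= x < p.
Proof.
  unfold residues; rewrite in_map_iff; split.
  - intros [k [<- Hk]]; apply in_seq in Hk; lia.
  - intros H; exists (Z.to_nat x); split; [lia|apply in_seq; lia].
Qed.

Lemma NoDup_residues p : NoDup (residues p).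
Proof. unfold residues. apply NoDup_map_NoDup_ForallPairs; [|apply seq_NoDup]. intros x y _ _ H; lia. Qed.

Lemma mod_unique_residue p X h : 0 < p -> (p | X - h) -> 0 <= h < p -> X mod p = h.
Proof. intros Hp [k Hk] Hh. symmetry. apply Z.mod_unique with k; lia. Qed.

Lemma mod_congr p X Y : 0 < p -> (p | X - Y) -> X mod p = Y mod p.
Proof. intros Hp [k Hk]. replace X with (Y + k * p) by lia. apply Z.mod_add; lia. Qed.

Lemma prime_odd_not_divide_2 p : prime p -> p <> 2 -> ~ (p | 2).
Proof. intros Hp H2 H. apply prime_divisors in H; [|apply prime_2]. pose proof (prime_ge_2 _ Hp). lia. Qed.

Lemma prime_not_divide_mul p x y : prime p -> ~ (p | x) -> ~ (p | y) -> ~ (p | x * y).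
Proof. intros Hp Hx Hy H. apply prime_mult in H; tauto. Qed.

Definition is_sqrt_mod (p D x : Z) : bool := (x * x - D) mod p =? 0.

Lemma zcount_sqrt_mod p D : prime p -> p <> 2 ->
  zcount (is_sqrt_mod p D) (residues p) =
  1 + (if D mod p =? 0 then 0 else if existsb (is_sqrt_mod p D) (residues p) then 1 else -1).
Proof.
  intros Hp H2. pose proof (prime_ge_2 _ Hp) as Hp2. assert (Hp0 : 0 < p) by lia.
  unfold is_sqrt_mod at 1.
  destruct (D mod p =? 0) eqn:ED.
  - apply mod_eqb_0 in ED; auto.
    apply (zcount_enum _ [0]); [apply NoDup_residues|repeat constructor; simpl; tauto|].
    intros x; rewrite In_residues, mod_eqb_0 by auto; simpl; split.
    + intros [Hx Hd]. left.
      assert (Hxx : (p | x * x)) by (replace (x * x) with ((x * x - D) + D) by ring; now apply Z.divide_add_r).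
      apply prime_mult in Hxx; auto. destruct Hxx as [[k Hk]|[k Hk]]; assert (k = 0) by nia; lia.
    + intros [<-|[]]. split; [lia|]. replace (0 * 0 - D) with (-1 * D) by ring. now apply Z.divide_mul_r.
  - apply mod_eqb_0_false in ED; auto.
    destruct (existsb (is_sqrt_mod p D) (residues p)) eqn:EX.
    + apply existsb_exists in EX. destruct EX as [x0 [Hx0 E0]]. apply In_residues in Hx0.
      apply mod_eqb_0 in E0; auto.
      assert (Hx0nz : x0 <> 0).
      { intros ->. apply ED. replace D with (-1 * (0 * 0 - D)) by ring. now apply Z.divide_mul_r. }
      assert (Hne : p - x0 <> x0).
      { intros E. assert (H2p : (2 | p)) by (exists x0; lia). apply prime_divisors in H2p; auto; lia. }
      apply (zcount_enum _ [x0; p - x0]); [apply NoDup_residues|repeat constructor; simpl; intuition|].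
      intros x; rewrite In_residues, mod_eqb_0 by auto; simpl; split.
      * intros [Hx Hd].
        assert (Hm : (p | (x - x0) * (x + x0))).
        { replace ((x - x0) * (x + x0)) with ((x * x - D) - (x0 * x0 - D)) by ring. now apply Z.divide_sub_r. }
        apply prime_mult in Hm; auto. destruct Hm as [[k Hk]|[k Hk]].
        -- left. assert (k = 0) by nia. lia.
        -- right; left. assert (k = 1) by nia. lia.
      * intros [<-|[<-|[]]]; split; auto; try lia.
        replace ((p - x0) * (p - x0) - D) with ((x0 * x0 - D) + p * (p - 2 * x0)) by ring.
        apply Z.divide_add_r; [auto|apply Z.divide_factor_l].
    + apply (zcount_enum _ []); [apply NoDup_residues|constructor|].
      intros x; simpl; split; [|tauto]. intros [Hx E].
      assert (existsb (is_sqrt_mod p D) (residues p) = true) by (apply existsb_exists; eauto).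
      congruence.
Qed.

Definition is_root_mod (p a b c h : Z) : bool := (a * h * h + b * h + c) mod p =? 0.

(* Completing the square: [h |-> 2 a h + b] maps roots of [a h^2 + b h + c] to square roots of [b^2 - 4 a c]. *)
Lemma zcount_root_mod_odd a b c p : prime p -> p <> 2 -> ~ (p | a) ->
  zcount (is_root_mod p a b c) (residues p) = zcount (is_sqrt_mod p (b * b - 4 * a * c)) (residues p).
Proof.
  intros Hp H2 Ha. pose proof (prime_ge_2 _ Hp). assert (Hp0 : 0 < p) by lia.
  assert (H2a : ~ (p | 2 * a)) by (apply prime_not_divide_mul; auto using prime_odd_not_divide_2).
  assert (H4a : ~ (p | 2 * (2 * a))) by (apply prime_not_divide_mul; auto using prime_odd_not_divide_2).
  destruct (rel_prime_bezout _ _ (prime_rel_prime _ Hp _ H2a)) as [u s E].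
  unfold is_root_mod, is_sqrt_mod.
  apply (zcount_bij _ _ _ _ (fun h => (2 * a * h + b) mod p) (fun x => ((x - b) * s) mod p));
    try apply NoDup_residues.
  - intros h Hh Hq. rewrite In_residues. split; [apply Z.mod_pos_bound; lia|].
    apply mod_eqb_0 in Hq; auto. apply mod_eqb_0; auto. destruct Hq as [k Hk].
    rewrite Z.mod_eq by lia. set (q := (2 * a * h + b) / p).
    assert (Hc : c = k * p - a * h * h - b * h) by lia. subst c.
    exists (4 * a * k - 2 * (2 * a * h + b) * q + p * q * q). ring.
  - intros x Hx Hq. rewrite In_residues. split; [apply Z.mod_pos_bound; lia|].
    apply mod_eqb_0 in Hq; auto. apply mod_eqb_0; auto. destruct Hq as [k Hk].
    rewrite Z.mod_eq by lia. set (q := (x - b) * s / p). set (h := (x - b) * s - p * q).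
    set (M := - (x - b) * u - 2 * a * q).
    assert (EM : 2 * a * h + b - x = p * M).
    { unfold h, M. transitivity ((x - b) * (u * p + s * (2 * a) - 1) + p * (- (x - b) * u - 2 * a * q)); [ring|].
      rewrite E; ring. }
    assert (Hdiv : (p | 2 * (2 * a) * (a * h * h + b * h + c))).
    { exists (k + 2 * x * M + p * M * M).
      replace (2 * (2 * a) * (a * h * h + b * h + c))
        with ((2 * a * h + b) * (2 * a * h + b) - (b * b - 4 * a * c)) by ring.
      replace (2 * a * h + b) with (x + p * M) by lia. lia. }
    apply prime_mult in Hdiv; auto. destruct Hdiv; [contradiction|auto].
  - intros h Hh _. apply In_residues in Hh. apply mod_unique_residue; auto.
    rewrite Z.mod_eq by lia. set (q := (2 * a * h + b) / p).
    exists (- h * u - q * s).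
    transitivity (h * (u * p + s * (2 * a) - 1) + (- h * u - q * s) * p); [ring|rewrite E; ring].
  - intros x Hx _. apply In_residues in Hx. apply mod_unique_residue; auto.
    rewrite Z.mod_eq by lia. set (q := (x - b) * s / p).
    exists (- (x - b) * u - 2 * a * q).
    transitivity ((x - b) * (u * p + s * (2 * a) - 1) + (- (x - b) * u - 2 * a * q) * p); [ring|rewrite E; ring].
Qed.

Lemma zcount_root_mod_degenerate a b c p : prime p -> (p | a) -> primitive (a, b, c) ->
  zcount (is_root_mod p a b c) (residues p) =
  (if (b * b - 4 * a * c) mod p =? 0 then 0
   else if existsb (is_sqrt_mod p (b * b - 4 * a * c)) (residues p) then 1 else -1).
Proof.
  intros Hp Ha Hpr. pose proof (prime_ge_2 _ Hp). assert (Hp0 : 0 < p) by lia.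
  destruct Ha as [ka ->]. unfold is_root_mod.
  destruct (Zdivide_dec p b) as [Hb|Hb].
  - (* then [p | c] at any root, contradicting primitivity *)
    replace ((b * b - 4 * (ka * p) * c) mod p =? 0) with true
      by (symmetry; apply mod_eqb_0; auto; destruct Hb as [kb ->]; exists (kb * kb * p - 4 * ka * c); ring).
    apply (zcount_enum _ []); [apply NoDup_residues|constructor|].
    intros h; simpl; split; [|tauto]. intros [Hh E]. apply mod_eqb_0 in E; auto.
    assert (Hc : (p | c)).
    { destruct Hb as [kb ->]. destruct E as [k Hk]. exists (k - ka * h * h - kb * h). lia. }
    assert (H1 : (p | 1))
      by (apply (primitive_common_divisor _ p Hpr); cbn [fa fb fc fst snd]; auto; exists ka; ring).
    apply Z.divide_1_r_nonneg in H1; lia.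
  - (* a single root [h = -c/b], and [Δ ≡ b^2 (mod p)] is a nonzero square *)
    replace ((b * b - 4 * (ka * p) * c) mod p =? 0) with false.
    2:{ symmetry. apply mod_eqb_0_false; auto. intros HD. apply Hb.
        assert (Hbb : (p | b * b)).
        { replace (b * b) with ((b * b - 4 * (ka * p) * c) + p * (4 * ka * c)) by ring.
          apply Z.divide_add_r; [auto|apply Z.divide_factor_l]. }
        apply prime_mult in Hbb; tauto. }
    replace (existsb _ (residues p)) with true.
    2:{ symmetry. apply existsb_exists. exists (b mod p). split; [apply In_residues, Z.mod_pos_bound; lia|].
        apply mod_eqb_0; auto. rewrite Z.mod_eq by lia.
        exists (-2 * b * (b / p) + p * (b / p) * (b / p) + 4 * ka * c). ring. }
    destruct (rel_prime_bezout _ _ (prime_rel_prime _ Hp _ Hb)) as [u s E].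
    apply (zcount_enum _ [(- c * s) mod p]); [apply NoDup_residues|repeat constructor; simpl; tauto|].
    intros h; rewrite In_residues, mod_eqb_0 by auto; simpl; split.
    + intros [Hh [k Hk]]. left. apply mod_unique_residue; auto.
      exists (- s * k + s * ka * h * h - h * u).
      transitivity (- s * (ka * p * h * h + b * h + c) + s * ka * p * h * h
                    + h * (u * p + s * b - 1) - h * u * p); [ring|].
      rewrite E, Hk. ring.
    + intros [<-|[]]. split; [apply Z.mod_pos_bound; lia|].
      rewrite Z.mod_eq by lia. set (q := - c * s / p).
      exists (ka * (- c * s - p * q) * (- c * s - p * q) + c * u - b * q).
      transitivity (ka * p * (- c * s - p * q) * (- c * s - p * q) + c * (1 - s * b) - b * p * q); [ring|].
      rewrite <- E. ring.
Qed.

Lemma zcount_parity_residues ra rb rc : 0 <= ra < 8 -> 0 <= rb < 8 -> 0 <= rc < 8 ->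
  ~ (ra mod 2 = 0 /\ rb mod 2 = 0 /\ rc mod 2 = 0) ->
  zcount (fun v => v mod 2 =? 0) [ra; rc; ra + rb + rc] =
  1 + (if ((rb * rb - 4 * ra * rc) mod 8) mod 2 =? 0 then 0
       else if ((rb * rb - 4 * ra * rc) mod 8 =? 1) || ((rb * rb - 4 * ra * rc) mod 8 =? 7) then 1 else -1).
Proof.
  intros Ha Hb Hc Hn.
  assert (R : forall r, 0 <= r < 8 -> r = 0 \/ r = 1 \/ r = 2 \/ r = 3 \/ r = 4 \/ r = 5 \/ r = 6 \/ r = 7) by lia.
  destruct (R ra Ha) as [->|[->|[->|[->|[->|[->|[->| ->]]]]]]];
  destruct (R rb Hb) as [->|[->|[->|[->|[->|[->|[->| ->]]]]]]];
  destruct (R rc Hc) as [->|[->|[->|[->|[->|[->|[->| ->]]]]]]];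
  try reflexivity; exfalso; apply Hn; repeat split; reflexivity.
Qed.

(* For [p = 2] everything only depends on [a], [b], [c] modulo 8. *)
Lemma zcount_imprimitive_2 a b c : primitive (a, b, c) ->
  zcount (fun v => v mod 2 =? 0) [a; c; a + b + c] = 1 + kronecker_prime (b * b - 4 * a * c) 2.
Proof.
  intros Hpr. unfold kronecker_prime. cbn [Z.eqb Pos.eqb]. rewrite Zeven_mod.
  assert (M82 : forall v, v mod 2 = (v mod 8) mod 2)
    by (intros; apply Zmod_div_mod; try lia; exists 4; lia).
  assert (Hn : ~ (a mod 8 mod 2 = 0 /\ b mod 8 mod 2 = 0 /\ c mod 8 mod 2 = 0)).
  { rewrite <- !M82. intros [h1 [h2 h3]].
    assert (H2 : (2 | 1)) by (apply (primitive_common_divisor _ 2 Hpr); apply Z.mod_divide; auto; lia).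
    apply Z.divide_1_r_nonneg in H2; lia. }
  pose proof (Z_div_mod_eq_full a 8) as Ea. pose proof (Z_div_mod_eq_full b 8) as Eb.
  pose proof (Z_div_mod_eq_full c 8) as Ec.
  assert (ED : (b * b - 4 * a * c) mod 8 = ((b mod 8) * (b mod 8) - 4 * (a mod 8) * (c mod 8)) mod 8).
  { apply mod_congr; [lia|].
    exists (8 * (b / 8) * (b / 8) + 2 * (b / 8) * (b mod 8) - 32 * (a / 8) * (c / 8)
            - 4 * (a / 8) * (c mod 8) - 4 * (a mod 8) * (c / 8)).
    rewrite Ea at 1. rewrite Eb at 1 2. rewrite Ec at 1. ring. }
  assert (ES : (a + b + c) mod 2 = (a mod 8 + b mod 8 + c mod 8) mod 2).
  { apply mod_congr; [lia|]. exists (4 * (a / 8 + b / 8 + c / 8)).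
    rewrite Ea at 1. rewrite Eb at 1. rewrite Ec at 1. ring. }
  rewrite M82, ED.
  rewrite <- zcount_parity_residues by (auto; apply Z.mod_pos_bound; lia).
  unfold zcount. cbn [filter]. rewrite (M82 a), (M82 c), ES.
  destruct (a mod 8 mod 2 =? 0), (c mod 8 mod 2 =? 0), ((a mod 8 + b mod 8 + c mod 8) mod 2 =? 0); reflexivity.
Qed.

Lemma zcount_imprimitive_lat a b c p : primitive (a, b, c) -> prime p ->
  zcount (fun i => fvec (a, b, c) (lat_gen i) mod p =? 0) (lat_indices p) =
  1 + kronecker_prime (disc (a, b, c)) p.
Proof.
  intros Hpr Hp. pose proof (prime_ge_2 _ Hp). assert (Hp0 : 0 < p) by lia.
  rewrite disc_abc. unfold lat_indices.
  change (seq 0 (S (Z.to_nat p))) with (0%nat :: seq 1 (Z.to_nat p)). rewrite <- seq_shift.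
  destruct (Z.eq_dec p 2) as [->|H2].
  - rewrite <- zcount_imprimitive_2 by auto.
    change (map S (seq 0 (Z.to_nat 2))) with [1%nat; 2%nat].
    unfold zcount; cbn [filter]. rewrite !fvec_lat_gen. cbn [fa fb fc fst snd].
    change (Z.of_nat 0) with 0. change (Z.of_nat 1) with 1.
    replace (a * 0 ^ 2 + b * 0 + c) with c by ring. replace (a * 1 ^ 2 + b * 1 + c) with (a + b + c) by ring.
    destruct (a mod 2 =? 0), (c mod 2 =? 0), ((a + b + c) mod 2 =? 0); reflexivity.
  - unfold kronecker_prime. replace (p =? 2) with false by (symmetry; now apply Z.eqb_neq).
    assert (Hroots : zcount (fun i => fvec (a, b, c) (lat_gen i) mod p =? 0) (map S (seq 0 (Z.to_nat p)))
                     = zcount (is_root_mod p a b c) (residues p)).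
    { unfold zcount, residues. rewrite !filter_map_swap, !length_map. do 2 f_equal. apply filter_ext.
      intros h. rewrite fvec_lat_gen. cbn [fa fb fc fst snd]. unfold is_root_mod. do 2 f_equal. ring. }
    rewrite zcount_cons, Hroots, fvec_lat_gen; cbn [fa fst].
    destruct (Zdivide_dec p a) as [Ha|Ha].
    + replace (a mod p =? 0) with true by (symmetry; apply mod_eqb_0; auto).
      rewrite zcount_root_mod_degenerate by auto. reflexivity.
    + replace (a mod p =? 0) with false by (symmetry; apply mod_eqb_0_false; auto).
      rewrite zcount_root_mod_odd, zcount_sqrt_mod by auto. reflexivity.
Qed.

(** * Summing the theta series of the primitive forms of [psi_list] *)

Definition primitive_index (f : form) (p : Z) (i : nat) : bool := negb (fvec f (lat_gen i) mod p =? 0).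
Definition in_pZ2 (p : Z) (v : Z * Z) : bool := (fst v mod p =? 0) && (snd v mod p =? 0).

Definition lat_mat_inv (p : Z) (i : nat) (v : Z * Z) : Z * Z :=
  match i with O => (fst v, snd v / p) | S h => ((fst v - Z.of_nat h * snd v) / p, snd v) end.

Lemma lat_mat_inv_mapp p i u : p <> 0 -> lat_mat_inv p i (mapp (lat_mat p i) u) = u.
Proof.
  intros Hp0. destruct u as [x y]; destruct i as [|h]; unfold lat_mat_inv, mapp, lat_mat; cbn [fst snd];
    f_equal; try ring.
  - replace (0 * x + p * y) with (y * p) by ring. now apply Z.div_mul.
  - replace (p * x + Z.of_nat h * y - Z.of_nat h * (0 * x + 1 * y)) with (x * p) by ring. now apply Z.div_mul.
Qed.

Lemma divide_add_multiple_iff p x y : (p | x + p * y) <-> (p | x).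
Proof.
  split; intros H.
  - replace x with ((x + p * y) - p * y) by ring. apply Z.divide_sub_r; [exact H|apply Z.divide_factor_l].
  - apply Z.divide_add_r; [exact H|apply Z.divide_factor_l].
Qed.

Section LatticeSum.
Variables (a b c p : Z).
Hypothesis Hf : pos_def (a, b, c).
Hypothesis Hpr : primitive (a, b, c).
Hypothesis Hp : prime p.

Let p_pos : 0 < p.
Proof. pose proof (prime_ge_2 _ Hp). lia. Qed.

Lemma in_pZ2_iff v : in_pZ2 p v = true <-> (p | fst v) /\ (p | snd v).
Proof. unfold in_pZ2. rewrite andb_true_iff, !mod_eqb_0 by apply p_pos. tauto. Qed.

Lemma zcount_primitive_index :
  zcount (primitive_index (a, b, c) p) (lat_indices p) = p - kronecker_prime (disc (a, b, c)) p.
Proof.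
  unfold primitive_index. rewrite zcount_negb, zcount_imprimitive_lat by auto.
  unfold lat_indices. rewrite length_seq. lia.
Qed.

Lemma theta_psi_form i n : (i <= Z.to_nat p)%nat ->
  theta (psi_form (a, b, c) p i) n =
  zcount (fun v => solb (a, b, c) (Z.of_nat n) v && in_lat p i v) (theta_box (a, b, c) n).
Proof.
  intros Hi. rewrite theta_zcount.
  apply (zcount_box_bij _ _ _ _ (mapp (lat_mat p i)) (lat_mat_inv p i)).
  - intros v Hv. apply solb_in_box; auto. now apply psi_form_pos_def.
  - intros v Hv. apply andb_prop in Hv. apply solb_in_box; tauto.
  - intros v Hv. unfold solb in *. rewrite fvec_psi_form in Hv by auto.
    apply andb_true_intro; split; [exact Hv|]. apply in_lat_mat; eauto.
  - intros v Hv. apply andb_prop in Hv. destruct Hv as [Hv Hl].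
    apply in_lat_mat in Hl; auto. destruct Hl as [u ->]. rewrite lat_mat_inv_mapp by lia.
    unfold solb in *. now rewrite fvec_psi_form.
  - intros v _. apply lat_mat_inv_mapp; lia.
  - intros v Hv. apply andb_prop in Hv. destruct Hv as [_ Hl].
    apply in_lat_mat in Hl; auto. destruct Hl as [u ->]. now rewrite lat_mat_inv_mapp by lia.
Qed.

(* Modulo [p], [f] restricted to [L_i] is [f(v_i)] times a square that is nonzero off [pZ^2]. *)
Lemma divide_fvec_in_lat i v : in_lat p i v = true -> not_in_pZ2 p v ->
  ((p | fvec (a, b, c) v) <-> (p | fvec (a, b, c) (lat_gen i))).
Proof.
  intros Hl Hnz. apply in_lat_iff in Hl; auto. destruct v as [x y]. unfold not_in_pZ2 in Hnz; cbn [fst snd] in Hnz.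
  destruct i as [|h]; unfold lat_eq in Hl; cbn [fst snd] in Hl; destruct Hl as [k Hk];
    rewrite fvec_lat_gen, fvec_abc; cbn [fa fb fc fst snd].
  - assert (Hx : ~ (p | x)) by (intro Hx; apply Hnz; split; auto; now exists k).
    rewrite Hk. replace (a * x * x + b * x * (k * p) + c * (k * p) * (k * p))
      with (a * (x * x) + p * (b * x * k + c * k * k * p)) by ring.
    rewrite divide_add_multiple_iff.
    split; [|now apply Z.divide_mul_l].
    intros Hd. apply prime_mult in Hd; auto. destruct Hd as [Hd|Hd]; auto.
    apply prime_mult in Hd; tauto.
  - assert (Hy : ~ (p | y)).
    { intro Hy; apply Hnz; split; auto. replace x with ((x - Z.of_nat h * y) + Z.of_nat h * y) by ring.
      apply Z.divide_add_r; [now exists k|now apply Z.divide_mul_r]. }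
    replace x with (Z.of_nat h * y + k * p) by lia.
    set (q := a * Z.of_nat h ^ 2 + b * Z.of_nat h + c).
    replace (a * (Z.of_nat h * y + k * p) * (Z.of_nat h * y + k * p) + b * (Z.of_nat h * y + k * p) * y + c * y * y)
      with (q * (y * y) + p * (2 * a * Z.of_nat h * y * k + a * k * k * p + b * k * y)) by (unfold q; ring).
    rewrite divide_add_multiple_iff.
    split; [|now apply Z.divide_mul_l].
    intros Hd. apply prime_mult in Hd; auto. destruct Hd as [Hd|Hd]; auto.
    apply prime_mult in Hd; tauto.
Qed.

Lemma zcount_primitive_lat_containing v :
  zcount (fun i => primitive_index (a, b, c) p i && in_lat p i v) (lat_indices p) =
  if in_pZ2 p v then p - kronecker_prime (disc (a, b, c)) p
  else if fvec (a, b, c) v mod p =? 0 then 0 else 1.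
Proof.
  destruct (in_pZ2 p v) eqn:Ez.
  - (* every [L_i] contains [pZ^2] *)
    rewrite <- zcount_primitive_index. unfold zcount. do 2 f_equal. apply filter_ext_in.
    intros i _. replace (in_lat p i v) with true; [apply andb_true_r|].
    symmetry. apply in_lat_iff; auto. apply in_pZ2_iff in Ez. destruct Ez as [[k1 E1] [k2 E2]].
    destruct v as [x y]; cbn [fst snd] in *.
    destruct i as [|h]; unfold lat_eq; cbn [fst snd]; [now exists k2|exists (k1 - Z.of_nat h * k2); lia].
  - assert (Hnz : not_in_pZ2 p v) by (unfold not_in_pZ2; rewrite <- in_pZ2_iff; congruence).
    pose proof (lat_of_le p Hp v Hnz) as Hle.
    rewrite (zcount_unique _ _ (lat_of p v)).
    + rewrite lat_of_in_lat, andb_true_r by auto. unfold primitive_index.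
      destruct (fvec (a, b, c) v mod p =? 0) eqn:E1, (fvec (a, b, c) (lat_gen (lat_of p v)) mod p =? 0) eqn:E2;
        try reflexivity; exfalso;
        [apply mod_eqb_0 in E1; apply mod_eqb_0_false in E2 | apply mod_eqb_0_false in E1; apply mod_eqb_0 in E2];
        auto; rewrite (divide_fvec_in_lat (lat_of p v) v) in E1 by (auto using lat_of_in_lat); tauto.
    + apply seq_NoDup.
    + apply in_seq. lia.
    + intros i Hi Hb. apply andb_prop in Hb. apply in_seq in Hi. apply lat_of_spec; try lia; tauto.
Qed.

Lemma zcount_solutions_pZ2 n :
  zcount (fun v => solb (a, b, c) (Z.of_nat n) v && in_pZ2 p v) (theta_box (a, b, c) n) =
  subst_pow (p ^ 2) (theta (a, b, c)) n.
Proof.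
  assert (Hp2 : 0 < p ^ 2) by (apply Z.pow_pos_nonneg; lia).
  unfold subst_pow. destruct (Z.of_nat n mod p ^ 2 =? 0) eqn:E.
  - apply mod_eqb_0 in E; auto. destruct E as [m Hm].
    assert (Hm0 : 0 <= m) by nia.
    replace (Z.of_nat n / p ^ 2) with m by (rewrite Hm, Z.div_mul; lia).
    rewrite theta_zcount, Z2Nat.id by exact Hm0.
    apply (zcount_box_bij _ _ _ _ (fun v => (fst v / p, snd v / p)) (fun w => (p * fst w, p * snd w))).
    + intros v Hv. apply andb_prop in Hv. apply solb_in_box; tauto.
    + intros v Hv. unfold theta_box. rewrite Z2Nat.id by exact Hm0. now apply solb_in_box.
    + intros [x y] Hv. apply andb_prop in Hv. destruct Hv as [Hs Hz]. apply in_pZ2_iff in Hz.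
      cbn [fst snd] in *. destruct Hz as [[k1 ->] [k2 ->]]. rewrite !Z.div_mul by lia.
      unfold solb in *. apply Z.eqb_eq in Hs. apply Z.eqb_eq.
      rewrite !(Z.mul_comm _ p), fvec_scale, Hm in Hs. rewrite Z.pow_2_r in Hs. nia.
    + intros [x y] Hv. unfold solb in *. apply Z.eqb_eq in Hv. apply andb_true_intro; split.
      * apply Z.eqb_eq. cbn [fst snd]. rewrite fvec_scale, Hv, Hm. ring.
      * apply in_pZ2_iff; cbn [fst snd]; split; apply Z.divide_factor_l.
    + intros [x y] Hv. apply andb_prop in Hv. destruct Hv as [_ Hz]. apply in_pZ2_iff in Hz.
      cbn [fst snd] in *. destruct Hz as [[k1 ->] [k2 ->]]. rewrite !Z.div_mul by lia. f_equal; ring.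
    + intros [x y] _. cbn [fst snd]. f_equal; rewrite Z.mul_comm, Z.div_mul; lia.
  - apply mod_eqb_0_false in E; auto.
    apply (zcount_enum _ []); [apply NoDup_box|constructor|].
    intros [x y]; simpl; split; [|tauto]. intros [_ Hv]. apply andb_prop in Hv. destruct Hv as [Hs Hz].
    apply in_pZ2_iff in Hz. cbn [fst snd] in Hz. destruct Hz as [[k1 ->] [k2 ->]].
    unfold solb in Hs. apply Z.eqb_eq in Hs. apply E. rewrite <- Hs.
    rewrite !(Z.mul_comm _ p), fvec_scale. exists (fvec (a, b, c) (k1, k2)). ring.
Qed.

(* Exchange the sum over the lattices [L_i] with the count of solutions [v] of [f(v) = n]. *)
Lemma sum_theta_primitive_psi_forms_vectors n :
  sum_list (map (fun i => if primitive_index (a, b, c) p i then theta (psi_form (a, b, c) p i) n else 0)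
                (lat_indices p)) =
  sum_list (map (fun v => if solb (a, b, c) (Z.of_nat n) v then
                            if in_pZ2 p v then p - kronecker_prime (disc (a, b, c)) p
                            else if Z.of_nat n mod p =? 0 then 0 else 1
                          else 0) (theta_box (a, b, c) n)).
Proof.
  set (B := theta_box (a, b, c) n). set (S := solb (a, b, c) (Z.of_nat n)).
  transitivity (sum_list (map (fun i => sum_list (map (fun v =>
     if primitive_index (a, b, c) p i && (S v && in_lat p i v) then 1 else 0) B)) (lat_indices p))).
  { apply sum_list_ext. intros i Hi. apply in_seq in Hi.
    destruct (primitive_index (a, b, c) p i).
    - rewrite theta_psi_form by lia. apply zcount_sum.
    - symmetry; apply sum_list_zero. }
  rewrite sum_list_swap. apply sum_list_ext. intros v _.
  destruct (S v) eqn:Es.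
  - unfold S, solb in Es. apply Z.eqb_eq in Es.
    rewrite <- Es, <- zcount_primitive_lat_containing, zcount_sum. reflexivity.
  - transitivity (sum_list (map (fun _ => 0) (lat_indices p))); [|apply sum_list_zero].
    apply sum_list_ext. intros i _. now rewrite andb_false_l, andb_false_r.
Qed.

Lemma sum_theta_primitive_psi_forms n :
  sum_list (map (fun i => if primitive_index (a, b, c) p i then theta (psi_form (a, b, c) p i) n else 0)
                (lat_indices p)) =
  (p - kronecker_prime (disc (a, b, c)) p) * subst_pow (p ^ 2) (theta (a, b, c)) n
    + theta (a, b, c) n - Pmr p 0 (theta (a, b, c)) n.
Proof.
  rewrite sum_theta_primitive_psi_forms_vectors.
  set (S := solb (a, b, c) (Z.of_nat n)). set (chi := kronecker_prime (disc (a, b, c)) p).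
  set (r := if Z.of_nat n mod p =? 0 then 0 else 1).
  assert (Hsplit : forall v, (if S v then (if in_pZ2 p v then p - chi else r) else 0) =
     (p - chi - r) * (if S v && in_pZ2 p v then 1 else 0) + r * (if S v then 1 else 0)).
  { intros v. destruct (S v), (in_pZ2 p v); cbn [andb]; ring. }
  rewrite (sum_list_ext _ _ _ (fun v _ => Hsplit v)), sum_list_add, !sum_list_mul_l, <- !zcount_sum.
  unfold S. rewrite zcount_solutions_pZ2, <- theta_zcount.
  unfold r, Pmr. destruct (Z.of_nat n mod p =? 0) eqn:En; [ring|].
  replace (subst_pow (p ^ 2) (theta (a, b, c)) n) with 0; [ring|].
  unfold subst_pow. replace (Z.of_nat n mod p ^ 2 =? 0) with false; [reflexivity|].
  symmetry. apply mod_eqb_0_false; [apply Z.pow_pos_nonneg; lia|].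
  intros Hd. apply mod_eqb_0_false in En; auto. apply En.
  eapply Z.divide_trans; [|exact Hd]. exists p. ring.
Qed.

End LatticeSum.

(** * The proper automorphisms of a primitive positive definite form *)

Section Automorphisms.
Variables (a b c : Z).

Let D := b * b - 4 * a * c.

Definition automorphism (s : mat) : Prop :=
  mdet s = 1 /\ forall v, fvec (a, b, c) (mapp s v) = fvec (a, b, c) v.

(* [aut_mat (t, u)] is the automorphism attached to the unit [(2 t + b u + u sqrt Δ) / 2]. *)
Definition aut_mat (t : Z * Z) : mat := (fst t, - c * snd t, a * snd t, fst t + b * snd t).
Definition unit_norm (t : Z * Z) : Z := fst t * fst t + fst t * b * snd t + a * c * snd t * snd t.

(* One representative of each pair [±t] of units. *)
Definition units : list (Z * Z) :=
  if D =? -3 then [(1, 0); ((1 - b) / 2, 1); ((-1 - b) / 2, 1)]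
  else if D =? -4 then [(1, 0); (- (b / 2), 1)] else [(1, 0)].

Lemma fvec_aut_mat t v : fvec (a, b, c) (mapp (aut_mat t) v) = unit_norm t * fvec (a, b, c) v.
Proof. destruct t, v; unfold fvec, feval, mapp, aut_mat, unit_norm; cbn [fa fb fc fst snd]. ring. Qed.

Lemma mdet_aut_mat t : mdet (aut_mat t) = unit_norm t.
Proof. destruct t; unfold mdet, aut_mat, unit_norm; cbn [fst snd]. ring. Qed.

Lemma aut_mat_automorphism t : unit_norm t = 1 -> automorphism (aut_mat t).
Proof. intros H. split; [now rewrite mdet_aut_mat|]. intros v. rewrite fvec_aut_mat, H. ring. Qed.

Definition unit_opp (t : Z * Z) : Z * Z := (- fst t, - snd t).

Lemma mapp_aut_mat_opp t v :
  mapp (aut_mat (unit_opp t)) v = (- fst (mapp (aut_mat t) v), - snd (mapp (aut_mat t) v)).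
Proof. destruct t, v; unfold mapp, aut_mat, unit_opp; cbn [fst snd]. f_equal; ring. Qed.

Lemma units_norm t : In t units -> unit_norm t = 1.
Proof.
  unfold units, unit_norm. destruct (D =? -3) eqn:E3; [|destruct (D =? -4) eqn:E4].
  - apply Z.eqb_eq in E3. unfold D in E3.
    destruct (Z.Even_or_Odd b) as [[k ->]|[k ->]]; [exfalso; nia|].
    replace (1 - (2 * k + 1)) with ((- k) * 2) by ring. replace (-1 - (2 * k + 1)) with ((- k - 1) * 2) by ring.
    rewrite !Z.div_mul by lia. intros [<-|[<-|[<-|[]]]]; cbn [fst snd]; nia.
  - apply Z.eqb_eq in E4. unfold D in E4.
    destruct (Z.Even_or_Odd b) as [[k ->]|[k ->]]; [|exfalso; nia].
    rewrite Z.mul_comm, Z.div_mul by lia. intros [<-|[<-|[]]]; cbn [fst snd]; nia.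
  - intros [<-|[]]; cbn [fst snd]; ring.
Qed.

Lemma length_units : length units = Z.to_nat (wD D).
Proof.
  unfold units, wD.
  destruct (D =? -3); [reflexivity|]. destruct (D =? -4); reflexivity.
Qed.

Lemma units_cross t t' : In t units -> In t' units -> t <> t' ->
  Z.abs (fst t * snd t' - fst t' * snd t) = 1.
Proof.
  unfold units. destruct (D =? -3) eqn:E3; [|destruct (D =? -4) eqn:E4].
  - apply Z.eqb_eq in E3. unfold D in E3.
    destruct (Z.Even_or_Odd b) as [[k ->]|[k ->]]; [exfalso; nia|].
    replace (1 - (2 * k + 1)) with ((- k) * 2) by ring. replace (-1 - (2 * k + 1)) with ((- k - 1) * 2) by ring.
    rewrite !Z.div_mul by lia.
    intros [<-|[<-|[<-|[]]]] [<-|[<-|[<-|[]]]] Hne; cbn [fst snd]; try congruence; lia.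
  - intros [<-|[<-|[]]] [<-|[<-|[]]] Hne; cbn [fst snd]; try congruence; lia.
  - intros [<-|[]] [<-|[]] Hne; congruence.
Qed.

Lemma NoDup_units : NoDup units.
Proof.
  unfold units. destruct (D =? -3) eqn:E3; [|destruct (D =? -4) eqn:E4].
  - apply Z.eqb_eq in E3. unfold D in E3.
    destruct (Z.Even_or_Odd b) as [[k ->]|[k ->]]; [exfalso; nia|].
    replace (1 - (2 * k + 1)) with ((- k) * 2) by ring. replace (-1 - (2 * k + 1)) with ((- k - 1) * 2) by ring.
    rewrite !Z.div_mul by lia.
    repeat constructor; simpl; intros H; repeat (destruct H as [H|H]; [inversion H; lia|]); auto.
  - repeat constructor; simpl; intros H; repeat (destruct H as [H|H]; [inversion H; lia|]); auto.
  - repeat constructor; simpl; auto.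
Qed.

Lemma automorphism_relations al be ga de :
  al * de - be * ga = 1 ->
  a * al * al + b * al * ga + c * ga * ga = a ->
  2 * a * al * be + b * (al * de + be * ga) + 2 * c * ga * de = b ->
  c * ga = - (a * be) /\ a * (al - de) = - (b * ga).
Proof.
  intros Hd q1 q3.
  assert (I1 : (b * al + 2 * c * ga) * (al * de - be * ga)
               = - 2 * be * (a * al * al + b * al * ga + c * ga * ga)
                 + al * (2 * a * al * be + b * (al * de + be * ga) + 2 * c * ga * de)) by ring.
  assert (I2 : (2 * a * al + b * ga) * (al * de - be * ga)
               = 2 * de * (a * al * al + b * al * ga + c * ga * ga)
                 - ga * (2 * a * al * be + b * (al * de + be * ga) + 2 * c * ga * de)) by ring.
  rewrite Hd, q1, q3 in I1, I2. lia.
Qed.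

Hypothesis Hf : pos_def (a, b, c).

Lemma disc_le_m3 : D <= -3.
Proof.
  destruct Hf as [_ Hd]. rewrite disc_abc in Hd. unfold D.
  destruct (Z.Even_or_Odd b) as [[k ->]|[k ->]]; nia.
Qed.

(* [4 unit_norm t = (2 t1 + b t2)^2 - Δ t2^2] with [Δ <= -3] forces [|t2| <= 1]. *)
Lemma unit_norm_units_pos t : 0 < snd t \/ (snd t = 0 /\ 0 < fst t) -> unit_norm t = 1 -> In t units.
Proof.
  destruct t as [t1 t2]. unfold unit_norm; cbn [fst snd]. intros Ht2 Hn.
  pose proof disc_le_m3 as HD.
  assert (Hsq : 4 = (2 * t1 + b * t2) * (2 * t1 + b * t2) - D * (t2 * t2))
    by (rewrite <- (Z.mul_1_r 4), <- Hn; unfold D; ring).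
  assert (0 <= (2 * t1 + b * t2) * (2 * t1 + b * t2)) by apply Z.square_nonneg.
  assert (Ht : (t2 = 0 /\ 0 < t1) \/ t2 = 1) by nia.
  unfold units. destruct Ht as [[-> Ht1] | ->].
  - assert (t1 = 1) as -> by nia.
    destruct (D =? -3); [|destruct (D =? -4)]; simpl; auto.
  - assert (HD4 : D = -3 \/ D = -4) by nia.
    destruct HD4 as [E|E]; rewrite E in Hsq |- *; cbn [Z.eqb Pos.eqb].
    + assert (2 * t1 + b = 1 \/ 2 * t1 + b = -1) as [E'|E'] by nia; [right; left|right; right; left];
        f_equal; [replace (1 - b) with (t1 * 2) by lia|replace (-1 - b) with (t1 * 2) by lia];
        now rewrite Z.div_mul.
    + assert (E' : 2 * t1 + b = 0) by nia. right; left. f_equal.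
      replace b with ((- t1) * 2) by lia. rewrite Z.div_mul by lia. ring.
Qed.

Lemma unit_norm_units t : unit_norm t = 1 -> In t units \/ In (unit_opp t) units.
Proof.
  intros Hn.
  assert (Hopp : unit_norm (unit_opp t) = 1) by (rewrite <- Hn; unfold unit_norm, unit_opp; cbn [fst snd]; ring).
  destruct t as [t1 t2]. unfold unit_opp in *; cbn [fst snd] in *.
  destruct (Z_lt_le_dec 0 t2) as [H|H]; [left; apply unit_norm_units_pos; cbn; auto|].
  destruct (Z.eq_dec t2 0) as [->|H0]; [destruct (Z_lt_le_dec 0 t1) as [H1|H1]|].
  - left. apply unit_norm_units_pos; cbn [fst snd]; auto.
  - right. apply unit_norm_units_pos; cbn [fst snd]; auto. right. split; [reflexivity|].
    unfold unit_norm in Hn; cbn [fst snd] in Hn. nia.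
  - right. apply unit_norm_units_pos; cbn [fst snd]; auto. left; lia.
Qed.

Hypothesis Hpr : primitive (a, b, c).

Lemma primitive_divide_coeff_mul x : (a | x * a) -> (a | x * b) -> (a | x * c) -> (a | x).
Proof.
  intros h1 h2 h3. apply Z.divide_abs_r.
  assert (G : (a | Z.gcd (Z.gcd (Z.abs x * a) (Z.abs x * b)) (Z.abs x * c))).
  { repeat apply Z.gcd_greatest;
      (destruct (Z.abs_eq_or_opp x) as [E|E]; rewrite E; [|rewrite Z.mul_opp_l; apply Z.divide_opp_r]); auto. }
  unfold primitive in Hpr; cbn [fa fb fc fst snd] in Hpr.
  rewrite Z.gcd_mul_mono_l, Z.abs_idemp, Z.gcd_mul_mono_l, Z.abs_idemp, Hpr, Z.mul_1_r in G.
  exact G.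
Qed.

Lemma automorphism_aut_mat s : automorphism s -> exists t, s = aut_mat t /\ unit_norm t = 1.
Proof.
  destruct s as [[[al be] ga] de]. intros [Hd H]. unfold mdet in Hd.
  assert (Hval : forall x y, fvec (a, b, c) (al * x + be * y, ga * x + de * y) = fvec (a, b, c) (x, y))
    by (intros x y; apply (H (x, y))).
  assert (q1 : a * al * al + b * al * ga + c * ga * ga = a).
  { pose proof (Hval 1 0) as e. rewrite !fvec_abc in e. lia. }
  assert (q3 : 2 * a * al * be + b * (al * de + be * ga) + 2 * c * ga * de = b).
  { pose proof (Hval 1 1) as e. pose proof (Hval 1 0) as e1. pose proof (Hval 0 1) as e2.
    rewrite !fvec_abc in e, e1, e2. lia. }
  destruct (automorphism_relations al be ga de Hd q1 q3) as [Hcg Hag].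
  destruct Hf as [Ha _]. cbn [fa fst] in Ha.
  assert (Hdiv : (a | ga)).
  { apply primitive_divide_coeff_mul; [exists ga; ring|exists (de - al); lia|exists (- be); lia]. }
  destruct Hdiv as [u ->].
  exists (al, u). unfold aut_mat, unit_norm; cbn [fst snd].
  assert (Hbe : be = - c * u) by (apply (Z.mul_cancel_l _ _ a); lia).
  assert (Hde : de = al + b * u) by (apply (Z.mul_cancel_l _ _ a); lia).
  subst be de. split; [now rewrite (Z.mul_comm u a)|]. rewrite <- Hd. ring.
Qed.

End Automorphisms.

(** * Equivalent forms in [psi_list] *)

Definition bil (g : form) (z w : Z * Z) : Z :=
  fvec g (fst z + fst w, snd z + snd w) - fvec g z - fvec g w.

Lemma fvec_comb g l m z y :
  fvec g (l * fst z + m * fst y, l * snd z + m * snd y) = l * l * fvec g z + l * m * bil g z y + m * m * fvec g y.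
Proof. rewrite (form_eta g). destruct z, y. unfold bil. cbn [fst snd]. rewrite !fvec_abc. ring. Qed.

Lemma compose_radical f g N z z' p :
  (forall v, fvec g v = fvec f (mapp N v)) -> mapp N z = (p * fst z', p * snd z') ->
  (p | fvec g z) /\ forall w, (p | bil g z w).
Proof.
  intros H Hz. split.
  - rewrite H, Hz, fvec_scale, <- surjective_pairing. exists (p * fvec f z'). ring.
  - intros w. unfold bil. rewrite !H.
    replace (mapp N (fst z + fst w, snd z + snd w)) with (mapp N (1 * fst z + 1 * fst w, 1 * snd z + 1 * snd w))
      by (f_equal; f_equal; ring).
    rewrite mapp_comb, Hz. cbn [fst snd].
    replace (1 * (p * fst z') + 1 * fst (mapp N w)) with (p * fst z' + 1 * fst (mapp N w)) by ring.
    replace (1 * (p * snd z') + 1 * snd (mapp N w)) with (p * snd z' + 1 * snd (mapp N w)) by ring.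
    rewrite (fvec_comb f p 1 z' (mapp N w)), fvec_scale, <- surjective_pairing.
    exists (bil f z' (mapp N w)). ring.
Qed.

(* [z] and [y] span [Z^2] modulo [p], so [g] vanishes identically modulo [p]. *)
Lemma radical_pair_not_primitive g p z y : prime p ->
  (p | fvec g z) -> (p | fvec g y) -> (p | bil g z y) ->
  ~ (p | fst z * snd y - snd z * fst y) -> ~ primitive g.
Proof.
  intros Hp hz hy hzy Hd Hg. set (d := fst z * snd y - snd z * fst y) in *.
  assert (Hspan : forall l m, (p | fvec g (l * fst z + m * fst y, l * snd z + m * snd y))).
  { intros l m. rewrite fvec_comb.
    apply Z.divide_add_r; [apply Z.divide_add_r|]; now apply Z.divide_mul_r. }
  assert (Hbasis : forall x w, (p | fvec g (d * x, d * w)) -> (p | fvec g (x, w))).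
  { intros x w H. rewrite fvec_scale in H. apply prime_mult in H; auto.
    destruct H as [H|H]; auto. apply prime_mult in H; tauto. }
  assert (he1 : (p | fvec g (1, 0))).
  { apply Hbasis. replace (d * 1, d * 0) with (snd y * fst z + - snd z * fst y, snd y * snd z + - snd z * snd y)
      by (unfold d; f_equal; ring). apply Hspan. }
  assert (he2 : (p | fvec g (0, 1))).
  { apply Hbasis. replace (d * 0, d * 1) with (- fst y * fst z + fst z * fst y, - fst y * snd z + fst z * snd y)
      by (unfold d; f_equal; ring). apply Hspan. }
  assert (he12 : (p | fvec g (1, 1))).
  { apply Hbasis. replace (d * 1, d * 1) with ((snd y - fst y) * fst z + (fst z - snd z) * fst y,
                                                (snd y - fst y) * snd z + (fst z - snd z) * snd y)
      by (unfold d; f_equal; ring). apply Hspan. }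
  assert (H1 : (p | 1)).
  { apply (primitive_common_divisor g p Hg); rewrite (form_coeffs g); cbn [fa fb fc fst snd]; auto.
    now repeat apply Z.divide_sub_r. }
  apply Z.divide_1_r_nonneg in H1; [|pose proof (prime_ge_2 _ Hp); lia].
  pose proof (prime_ge_2 _ Hp). lia.
Qed.

Lemma compose_det_p_quotient f g N M p : prime p -> mdet N = p -> mdet M = p ->
  (forall v, fvec g v = fvec f (mapp N v)) -> (forall v, fvec g v = fvec f (mapp M v)) -> primitive g ->
  exists S, mmul N (madj M) = mscal p S.
Proof.
  intros Hp dN dM HN HM Hg.
  assert (Hrad : forall K j, (forall v, fvec g v = fvec f (mapp K v)) -> mdet K = p ->
            (p | fvec g (mapp (madj K) j)) /\ forall w, (p | bil g (mapp (madj K) j) w)).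
  { intros K j HK dK. apply (compose_radical f g K _ j p HK). now rewrite mapp_adj_r, dK. }
  assert (Hdet : forall j l, (p | fst (mapp (madj N) j) * snd (mapp (madj M) l)
                                 - snd (mapp (madj N) j) * fst (mapp (madj M) l))).
  { intros j l. destruct (Hrad N j HN dN) as [hz hzw]. destruct (Hrad M l HM dM) as [hy _].
    destruct (Zdivide_dec p (fst (mapp (madj N) j) * snd (mapp (madj M) l)
                             - snd (mapp (madj N) j) * fst (mapp (madj M) l))) as [X|X]; auto.
    exfalso. exact (radical_pair_not_primitive g p _ _ Hp hz hy (hzw _) X Hg). }
  pose proof (Hdet (0, 1) (1, 0)) as [s1 E1]. pose proof (Hdet (0, 1) (0, 1)) as [s2 E2].
  pose proof (Hdet (1, 0) (1, 0)) as [s3 E3]. pose proof (Hdet (1, 0) (0, 1)) as [s4 E4].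
  exists (- s1, - s2, s3, s4).
  destruct N as [[[n1 n2] n3] n4], M as [[[m1 m2] m3] m4].
  unfold mapp, madj, mmul, mscal in *; cbn [fst snd] in *.
  apply mat_eq4; lia.
Qed.

Lemma in_lat_opp p i w : prime p -> in_lat p i w = true -> in_lat p i (- fst w, - snd w) = true.
Proof.
  intros Hp H. apply in_lat_iff in H; auto. apply in_lat_iff; auto.
  replace (lat_eq i _) with (- lat_eq i w) by (destruct i; unfold lat_eq; cbn [fst snd]; ring).
  now apply Z.divide_opp_r.
Qed.

Lemma pair_scal_inj q u w : q <> 0 -> (q * fst u, q * snd u) = (q * fst w, q * snd w) -> u = w.
Proof.
  intros Hq E. injection E as E1 E2. apply Z.mul_cancel_l in E1, E2; auto.
  destruct u, w; cbn [fst snd] in *; congruence.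
Qed.

Section PsiEquivalence.
Variables (a b c p : Z).
Hypothesis Hp : prime p.

Let p_pos : 0 < p.
Proof. pose proof (prime_ge_2 _ Hp). lia. Qed.

(* An automorphism mapping [v_k] into [L_i] maps [L_k] onto [L_i]. *)
Lemma unit_psi_form_equiv i k t : (i <= Z.to_nat p)%nat -> (k <= Z.to_nat p)%nat -> In t (units a b c) ->
  in_lat p i (mapp (aut_mat a b c t) (lat_gen k)) = true ->
  sl2_equiv (psi_form (a, b, c) p i) (psi_form (a, b, c) p k).
Proof.
  intros Hi Hk Ht Hl.
  set (s := aut_mat a b c t). destruct (aut_mat_automorphism a b c t (units_norm a b c t Ht)) as [ds As].
  fold s in ds, As.
  set (Mi := lat_mat p i). set (Mk := lat_mat p k).
  assert (Col : forall e, exists u, mapp s (mapp Mk e) = mapp Mi u).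
  { intros e. apply in_lat_mat; auto.
    assert (Le : in_lat p k (mapp Mk e) = true) by (apply in_lat_mat; eauto).
    destruct (in_lat_lat_gen_comb p Hp k _ Le) as [l [z ->]].
    rewrite mapp_comb. apply in_lat_comb; auto. }
  destruct (Col (1, 0)) as [c1 H1]. destruct (Col (0, 1)) as [c2 H2].
  set (G := (fst c1, fst c2, snd c1, snd c2) : mat).
  assert (EG : mmul Mi G = mmul s Mk).
  { apply mat_ext. intros [x y].
    rewrite !mapp_mul, (mapp_columns Mk x y), mapp_comb, H1, H2.
    unfold G. destruct c1 as [u1 u2], c2 as [w1 w2]; cbn [fst snd].
    destruct Mi as [[[a1 a2] a3] a4]. unfold mapp; cbn [fst snd]. f_equal; ring. }
  assert (dG : mdet G = 1).
  { assert (E : mdet (mmul Mi G) = mdet (mmul s Mk)) by now rewrite EG.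
    rewrite !mdet_mul in E. unfold Mi, Mk in E. rewrite !mdet_lat_mat, ds in E.
    apply (Z.mul_cancel_l _ _ p); lia. }
  apply sl2_equiv_mat. exists G. split; [exact dG|]. intros v.
  rewrite !fvec_psi_form by auto. fold Mi Mk.
  rewrite <- As, <- mapp_mul, <- EG, mapp_mul. reflexivity.
Qed.

Hypothesis Hf : pos_def (a, b, c).
Hypothesis Hpr : primitive (a, b, c).

(* By [compose_det_p_quotient], [lat_mat p i G = S lat_mat p k] for an automorphism [S]. *)
Lemma psi_form_equiv_unit i k : (i <= Z.to_nat p)%nat -> (k <= Z.to_nat p)%nat ->
  primitive (psi_form (a, b, c) p k) -> sl2_equiv (psi_form (a, b, c) p i) (psi_form (a, b, c) p k) ->
  exists t, In t (units a b c) /\ in_lat p i (mapp (aut_mat a b c t) (lat_gen k)) = true.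
Proof.
  intros Hi Hk Hprk E. apply sl2_equiv_mat in E. destruct E as [G [dG HG]].
  set (N := mmul (lat_mat p i) G). set (M := lat_mat p k).
  assert (HN : forall v, fvec (psi_form (a, b, c) p k) v = fvec (a, b, c) (mapp N v))
    by (intros v; rewrite HG; unfold N; rewrite mapp_mul; now apply fvec_psi_form).
  assert (HM : forall v, fvec (psi_form (a, b, c) p k) v = fvec (a, b, c) (mapp M v))
    by (intros v; now apply fvec_psi_form).
  assert (dN : mdet N = p) by (unfold N; rewrite mdet_mul, mdet_lat_mat, dG; ring).
  assert (dM : mdet M = p) by apply mdet_lat_mat.
  destruct (compose_det_p_quotient _ _ N M p Hp dN dM HN HM Hprk) as [S HS].
  assert (SM : forall v, mapp S (mapp M v) = mapp N v).
  { intros v. apply (pair_scal_inj p); [lia|].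
    rewrite <- mapp_scal, <- HS, mapp_mul, mapp_adj_l, dM. destruct v. apply mapp_scal_r. }
  assert (dS : mdet S = 1).
  { assert (E : mdet (mscal p S) = mdet (mmul N (madj M))) by now rewrite HS.
    rewrite mdet_scal, mdet_mul, mdet_adj, dN, dM in E.
    apply (Z.mul_cancel_l _ _ (p * p)); nia. }
  assert (aS : automorphism a b c S).
  { split; auto. intros [x y]. apply (Z.mul_cancel_l _ _ (p * p)); [nia|].
    rewrite (surjective_pairing (mapp S (x, y))), <- !fvec_scale, <- mapp_scal_r.
    replace (p * x, p * y) with (mapp M (mapp (madj M) (x, y))) by now rewrite mapp_adj_r, dM.
    now rewrite SM, <- HN, HM. }
  destruct (automorphism_aut_mat a b c Hf Hpr S aS) as [t [-> Ht]].
  assert (L : in_lat p i (mapp (aut_mat a b c t) (lat_gen k)) = true).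
  { rewrite (lat_gen_mat p k). fold M. rewrite SM. unfold N. rewrite mapp_mul. apply in_lat_mat; eauto. }
  destruct (unit_norm_units a b c Hf t Ht) as [Hu|Hu]; [now exists t|].
  exists (unit_opp t). split; [exact Hu|]. rewrite mapp_aut_mat_opp. now apply in_lat_opp.
Qed.

End PsiEquivalence.

(** * Each class is represented [w] times *)

Definition prop_bool (P : Prop) : bool := if excluded_middle_informative P then true else false.

Lemma prop_bool_spec P : prop_bool P = true <-> P.
Proof. unfold prop_bool. destruct (excluded_middle_informative P); split; auto; congruence. Qed.

Lemma det_aut_mat a b c t t' v :
  fst (mapp (aut_mat a b c t) v) * snd (mapp (aut_mat a b c t') v)
  - snd (mapp (aut_mat a b c t) v) * fst (mapp (aut_mat a b c t') v)
  = (fst t * snd t' - fst t' * snd t) * fvec (a, b, c) v.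
Proof. destruct t, t', v; unfold mapp, aut_mat; rewrite fvec_abc; cbn [fst snd]. ring. Qed.

Lemma reps_equiv_eq R F F' :
  (forall i j d, (i < j < length R)%nat -> ~ sl2_equiv (nth i R d) (nth j R d)) ->
  In F R -> In F' R -> sl2_equiv F F' -> F = F'.
Proof.
  intros HR HF HF' E.
  destruct (In_nth R F (0, 0, 0) HF) as [i [Hi <-]]. destruct (In_nth R F' (0, 0, 0) HF') as [j [Hj <-]].
  destruct (Nat.lt_trichotomy i j) as [L|[<-|L]]; [exfalso|reflexivity|exfalso].
  - exact (HR i j _ (conj L Hj) E).
  - exact (HR j i _ (conj L Hi) (sl2_equiv_sym _ _ E)).
Qed.

Lemma reps_NoDup R :
  (forall i j d, (i < j < length R)%nat -> ~ sl2_equiv (nth i R d) (nth j R d)) -> NoDup R.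
Proof.
  intros HR. apply (NoDup_nth R (0, 0, 0)). intros i j Hi Hj E.
  destruct (Nat.lt_trichotomy i j) as [L|[L|L]]; auto; exfalso.
  - apply (HR i j (0, 0, 0)); [lia|]. rewrite E. apply sl2_equiv_refl.
  - apply (HR j i (0, 0, 0)); [lia|]. rewrite E. apply sl2_equiv_refl.
Qed.

Section Orbits.
Variables (a b c p : Z).
Hypothesis Hf : pos_def (a, b, c).
Hypothesis Hpr : primitive (a, b, c).
Hypothesis Hp : prime p.

Let f : form := (a, b, c).

Let p_pos : 0 < p.
Proof. pose proof (prime_ge_2 _ Hp). lia. Qed.

(* [t |-> L(aut_mat t v_k)] is injective on [units]: otherwise [p] divides [±f(v_k)] by [in_lat_det]. *)
Lemma zcount_psi_forms_equiv k : (k <= Z.to_nat p)%nat -> primitive (psi_form f p k) ->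
  zcount (fun i => prop_bool (sl2_equiv (psi_form f p i) (psi_form f p k))) (lat_indices p) = wD (disc f).
Proof.
  intros Hk Hprk.
  assert (NZ : forall t, In t (units a b c) -> not_in_pZ2 p (mapp (aut_mat a b c t) (lat_gen k))).
  { intros t Ht. apply not_in_pZ2_mapp; [|apply lat_gen_not_in_pZ2; auto].
    apply aut_mat_automorphism. now apply units_norm. }
  set (lat_of_unit := fun t => lat_of p (mapp (aut_mat a b c t) (lat_gen k))).
  rewrite (zcount_enum _ (map lat_of_unit (units a b c))).
  - rewrite length_map, length_units by auto. unfold f. rewrite disc_abc. unfold wD.
    destruct (b * b - 4 * a * c =? -3); [reflexivity|]. destruct (b * b - 4 * a * c =? -4); reflexivity.
  - apply seq_NoDup.
  - apply NoDup_map_NoDup_ForallPairs; [|now apply NoDup_units].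
    intros t t' Ht Ht' E.
    destruct (excluded_middle_informative (t = t')) as [|Hne]; auto. exfalso.
    assert (L1 : in_lat p (lat_of_unit t) (mapp (aut_mat a b c t) (lat_gen k)) = true)
      by (apply lat_of_in_lat, NZ; auto).
    assert (L2 : in_lat p (lat_of_unit t) (mapp (aut_mat a b c t') (lat_gen k)) = true)
      by (rewrite E; apply lat_of_in_lat, NZ; auto).
    pose proof (in_lat_det p Hp _ _ _ L1 L2) as Hd. rewrite det_aut_mat in Hd.
    rewrite <- Z.divide_abs_r, Z.abs_mul, (units_cross a b c t t' Ht Ht' Hne), Z.mul_1_l,
      Z.divide_abs_r in Hd.
    apply (psi_form_primitive f p Hp k Hpr Hk) in Hprk. exact (Hprk Hd).
  - intros i. split.
    + intros [Hi Hd]. apply (proj1 (prop_bool_spec _)) in Hd. apply in_seq in Hi.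
      destruct (psi_form_equiv_unit a b c p Hp Hf Hpr i k ltac:(lia) Hk Hprk Hd) as [t [Ht Hl]].
      apply in_map_iff. exists t. split; auto. symmetry. apply lat_of_spec; auto. lia.
    + intros Hi. apply in_map_iff in Hi. destruct Hi as [t [Ei Ht]].
      pose proof (lat_of_le p Hp _ (NZ t Ht)) as Hle.
      split; [apply in_seq; unfold lat_of_unit in Ei; lia|]. apply (proj2 (prop_bool_spec _)).
      apply (unit_psi_form_equiv a b c p Hp i k t); auto; [unfold lat_of_unit in Ei; lia|].
      rewrite <- Ei. apply lat_of_in_lat; auto.
Qed.

Lemma zcount_reps_equiv R i : reps_of_classes R (psi_list f p) -> (i <= Z.to_nat p)%nat ->
  zcount (fun F => prop_bool (sl2_equiv (psi_form f p i) F)) R = if primitive_index f p i then 1 else 0.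
Proof.
  intros [H1 [H2 H3]] Hi.
  assert (Hprim : primitive (psi_form f p i) <-> primitive_index f p i = true).
  { unfold primitive_index. rewrite negb_true_iff, mod_eqb_0_false by lia.
    now apply psi_form_primitive. }
  destruct (primitive_index f p i) eqn:E.
  - destruct (H2 _ (psi_form_in f p i Hi) (proj2 Hprim eq_refl)) as [F [HF HiF]].
    rewrite (zcount_unique R _ F (reps_NoDup R H3) HF).
    + replace (prop_bool _) with true; [reflexivity|]. symmetry. now apply prop_bool_spec.
    + intros F' HF' Hd. apply (proj1 (prop_bool_spec _)) in Hd. symmetry.
      apply (reps_equiv_eq R F F' H3 HF HF'). eapply sl2_equiv_trans; [apply sl2_equiv_sym|]; eauto.
  - apply (zcount_enum _ []); [now apply reps_NoDup|constructor|].
    intros F; simpl; split; [|tauto]. intros [HF Hd]. apply (proj1 (prop_bool_spec _)) in Hd.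
    assert (Hpri : primitive (psi_form f p i)) by (eapply sl2_equiv_primitive; [exact Hd|apply H1, HF]).
    apply Hprim in Hpri. discriminate.
Qed.

Lemma sum_reps_theta R n : reps_of_classes R (psi_list f p) ->
  wD (disc f) * sum_list (map (fun F => theta F n) R) =
  sum_list (map (fun i => if primitive_index f p i then theta (psi_form f p i) n else 0) (lat_indices p)).
Proof.
  intros HR. set (equiv := fun i F => prop_bool (sl2_equiv (psi_form f p i) F)).
  transitivity (sum_list (map (fun F => sum_list (map (fun i =>
     if equiv i F then theta (psi_form f p i) n else 0) (lat_indices p))) R)).
  - rewrite <- sum_list_mul_l. apply sum_list_ext. intros F HF.
    destruct HR as [H1 _]. destruct (H1 F HF) as [HprF [G [HG HGF]]].
    destruct (In_psi_list f p G HG) as [k [Hk ->]].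
    assert (Hprk : primitive (psi_form f p k)) by (eapply sl2_equiv_primitive; eauto).
    rewrite <- (zcount_psi_forms_equiv k Hk Hprk), zcount_sum, Z.mul_comm, <- sum_list_mul_l.
    apply sum_list_ext. intros i Hi. apply in_seq in Hi. unfold equiv.
    destruct (prop_bool (sl2_equiv (psi_form f p i) (psi_form f p k))) eqn:Ek;
      destruct (prop_bool (sl2_equiv (psi_form f p i) F)) eqn:EF;
      rewrite ?prop_bool_spec in Ek; rewrite ?prop_bool_spec in EF; try ring.
    + rewrite Z.mul_1_r. symmetry. apply sl2_equiv_theta; [exact EF|apply psi_form_pos_def; auto; lia].
    + exfalso. rewrite <- not_true_iff_false, prop_bool_spec in EF. eauto using sl2_equiv_trans.
    + exfalso. rewrite <- not_true_iff_false, prop_bool_spec in Ek.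
      eauto using sl2_equiv_trans, sl2_equiv_sym.
  - rewrite sum_list_swap. apply sum_list_ext. intros i Hi. apply in_seq in Hi.
    transitivity (theta (psi_form f p i) n * zcount (equiv i) R).
    + rewrite zcount_sum, <- sum_list_mul_l. apply sum_list_ext. intros F _. destruct (equiv i F); ring.
    + unfold equiv. rewrite zcount_reps_equiv by (auto; lia).
      destruct (primitive_index f p i); ring.
Qed.

End Orbits.

Theorem theorem5p1 (a b c p : Z) (R : list form) :
  pos_def (a, b, c) ->
  primitive (a, b, c) ->
  prime p ->
  reps_of_classes R (psi_list (a, b, c) p) ->
  forall n : nat,
    wD (disc (a, b, c)) * sum_list (map (fun F => theta F n) R)
    = (p - kronecker_prime (disc (a, b, c)) p) * subst_pow (p ^ 2) (theta (a, b, c)) n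
      + theta (a, b, c) n - Pmr p 0 (theta (a, b, c)) n.
Proof.
  intros Hf Hpr Hp HR n.
  rewrite (sum_reps_theta a b c p Hf Hpr Hp R n HR).
  now apply sum_theta_primitive_psi_forms.
Qed.
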